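(* Let $\mathcal C$ be a multi-Reedy category. Then $\Theta\mathcal C$ is a multi-Reedy category with inverse subcategory $(\Theta\mathcal C)^-$, direct sub-multicategory $(\Theta\mathcal C)^+( * )$ and degree function $\deg([m](c_1,\dots,c_m))=m+\sum_{i=1}^m\deg(c_i)$, as defined in the context. In particular, $\Theta\mathcal C$ admits the structure of a Reedy category.
   Context: Multimorphisms: for a small category $\mathcal C$ and objects $c,d_1,\dots,d_m$ ($m\ge0$), a multimorphism $c\to d_1,\dots,d_m$ is a tuple $(\alpha_s\colon c\to d_s)_{s=1..m}$ of morphisms of $\mathcal C$ (for $m=0$ there is exactly one). These form a symmetric multicategory $\mathcal C( * )$ (composition: precomposition with a morphism, and postcomposition of each output $d_s$ with a multimorphism out of $d_s$, collecting all outputs; outputs can be permuted); a wide sub-multicategory contains all objects and identities and is closed under these operations. A multi-Reedy category is a small category $\mathcal C$ with a wide subcategory $\mathcal C^-$, a wide sub-multicategory $\mathcal C^+( * )\subseteq\mathcal C( * )$, and $\deg\colon\mathrm{ob}(\mathcal C)\to\mathbb N$ such that: (1) every multimorphism $\alpha$ of $\mathcal C( * )$ factors uniquely as $\alpha=\alpha^+\alpha^-$ with $\alpha^-\colon c\to x$ a morphism in $\mathcal C^-$ and $\alpha^+\colon x\to d_1,\dots,d_m$ in $\mathcal C^+( * )$; (2) every multimorphism $c\to d_1,\dots,d_m$ in $\mathcal C^+( * )$ satisfies $\deg(c)\le\sum_i\deg(d_i)$; a morphism $c\to d$ in $\mathcal C^+=\mathcal C\cap\mathcal C^+( * )$ has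 $\deg c=\deg d$ iff it is an identity; a morphism $c\to d$ in $\mathcal C^-$ has $\deg c\ge\deg d$, with equality iff it is an identity. A Reedy category is the analogous structure with only single-output morphisms (unique factorization $\alpha=\alpha^+\alpha^-$, $\deg$ non-decreasing along $\mathcal C^+$, non-increasing along $\mathcal C^-$, equality iff identity). $\Delta$ is the category of the totally ordered sets $[n]=\{0<1<\dots<n\}$, $n\ge0$, and order-preserving maps. $\Delta^-$ is the subcategory of surjections; $\Delta^+( * )$ consists of the multimorphisms $(\alpha_s\colon[m]\to[n_s])_s$ forming a monomorphic family (if $\alpha_s\beta=\alpha_s\beta'$ for all $s$ then $\beta=\beta'$). $\Theta\mathcal C$: objects are $[m](c_1,\dots,c_m)$ with $m\ge0$ and $c_i\in\mathrm{ob}\,\mathcal C$. A morphism $[m](c_1,\dots,c_m)\to[n](d_1,\dots,d_n)$ is $(\alpha,\{f_i\})$ where $\alpha\colon[m]\to[n]$ is in $\Delta$ and, for each $i=1,\dots,m$, $f_i=(f_{ij}\colon c_i\to d_j)_{\alpha(i-1)<j\le\alpha(i)}$ is a multimorphism of $\mathcal C( * )$. Composition: $(\beta,\{g_j\})\circ(\alpha,\{f_i\})=(\beta\alpha,\{h_i\})$ with $h_{ik}=g_{jk}f_{ij}$ for $\alpha(i-1)<j\le\alpha(i)$, $\beta(j-1)<k\le\beta(j)$. $(\Theta\mathcal C)^-$: morphisms $(\alpha,\{f_i\})$ such that $\alpha\in\Delta^-$ and, for each $i$ with $\alpha(i-1)<\alpha(i)$, the morphism $f_i\colon c_i\to d_{\alpha(i)}$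 is in $\mathcal C^-$. $(\Theta\mathcal C)^+( * )$: multimorphisms $(f_s)_{s=1..u}$ with $f_s=(\alpha_s,\{f_{si}\})\colon[m](c_1,\dots,c_m)\to[n_s](d_{s1},\dots,d_{sn_s})$ such that $(\alpha_s)_s\colon[m]\to[n_1],\dots,[n_u]$ is in $\Delta^+( * )$ and, for each $i=1,\dots,m$, the multimorphism $(f_{sij}\colon c_i\to d_{sj})_{s=1..u,\ \alpha_s(i-1)<j\le\alpha_s(i)}$ is in $\mathcal C^+( * )$. *)

From HB Require Import structures.
From mathcomp Require Import all_boot.
From mathcomp Require Import zify.
From Stdlib Require Import Permutation.

Set Implicit Arguments.
Unset Strict Implicit.
Unset Printing Implicit Defensive.

Record catData := CatData {
  Ob : Type;
  Hom : Ob -> Ob -> Type;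
  idm : forall c : Ob, Hom c c;
  comp : forall a b c : Ob, Hom b c -> Hom a b -> Hom a c }.
Arguments Hom {_} _ _.
Arguments idm {_} _.
Arguments comp {_ _ _ _} _ _.

Definition is_category (C : catData) : Prop :=
  [/\ (forall (a b : Ob C) (f : Hom a b), comp (idm b) f = f),
      (forall (a b : Ob C) (f : Hom a b), comp f (idm a) = f) &
      (forall (a b c d : Ob C) (f : Hom a b) (g : Hom b c) (h : Hom c d),
          comp h (comp g f) = comp (comp h g) f)].

(* f : c -> d is an identity (in particular d = c) *)
Definition is_identity (C : catData) (c d : Ob C) (f : Hom c d) : Prop :=
  existT (fun e => Hom c e) d f = existT (fun e => Hom c e) c (idm c).

Definition wide_subcategory (C : catData)
  (P : forall a b : Ob C, Hom a b -> Prop) : Prop :=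
  (forall c, P c c (idm c)) /\
  (forall a b c (f : Hom a b) (g : Hom b c), P a b f -> P b c g -> P a c (comp g f)).

(* Multimorphisms c -> d_1,...,d_m : the list [(d_1,a_1);...;(d_m,a_m)].   *)
Definition mmor (C : catData) (c : Ob C) : Type := seq {d : Ob C & Hom c d}.

Definition mprecomp (C : catData) (b c : Ob C) (a : mmor c) (h : Hom b c) : mmor b :=
  map (fun p => existT (fun d => Hom b d) (projT1 p) (comp (projT2 p) h)) a.

(* composition in C(star): each output (d_s, a_s) of a multimorphism is paired
   with a multimorphism b_s out of d_s; the result is (b_sk a_s)_{s,k}.     *)
Definition mcomp (C : catData) (c : Ob C)
  (g : seq {p : {d : Ob C & Hom c d} & mmor (projT1 p)}) : mmor c :=
  flatten (map (fun q : {p : {d : Ob C & Hom c d} & mmor (projT1 p)} =>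
                 mprecomp (projT2 q) (projT2 (projT1 q))) g).

Definition wide_submulticategory (C : catData)
  (P : forall c : Ob C, mmor c -> Prop) : Prop :=
  [/\ (forall c, P c [:: existT (fun d => Hom c d) c (idm c)]),
      (forall c (g : seq {p : {d : Ob C & Hom c d} & mmor (projT1 p)}),
          P c (map (@projT1 _ _) g) ->
          List.Forall (fun q => P (projT1 (projT1 q)) (projT2 q)) g ->
          P c (mcomp g)) &
      (forall c (a a' : mmor c), Permutation a a' -> P c a -> P c a')].

Definition is_multi_reedy (C : catData) (Cm : forall a b : Ob C, Hom a b -> Prop)
  (Cp : forall c : Ob C, mmor c -> Prop) (deg : Ob C -> nat) : Prop :=
  [/\ is_category C, wide_subcategory Cm, wide_submulticategory Cp,
      (forall (c : Ob C) (a : mmor c),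
         exists! fa : {x : Ob C & (Hom c x * mmor x)%type},
           [/\ Cm c (projT1 fa) (projT2 fa).1, Cp (projT1 fa) (projT2 fa).2 &
               a = mprecomp (projT2 fa).2 (projT2 fa).1]) &
      [/\ (forall c (a : mmor c), Cp c a -> deg c <= \sum_(p <- a) deg (projT1 p)),
          (forall (c d : Ob C) (f : Hom c d), Cp c [:: existT (fun e => Hom c e) d f] ->
              (deg c = deg d <-> is_identity f)) &
          (forall (c d : Ob C) (f : Hom c d), Cm c d f ->
              deg d <= deg c /\ (deg c = deg d <-> is_identity f))]].

Definition is_reedy (C : catData) (Rm Rp : forall a b : Ob C, Hom a b -> Prop)
  (deg : Ob C -> nat) : Prop :=
  [/\ is_category C, wide_subcategory Rm, wide_subcategory Rp,
      (forall (a b : Ob C) (f : Hom a b),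
         exists! fa : {x : Ob C & (Hom a x * Hom x b)%type},
           [/\ Rm a (projT1 fa) (projT2 fa).1, Rp (projT1 fa) b (projT2 fa).2 &
               f = comp (projT2 fa).2 (projT2 fa).1]) &
      ((forall a b (f : Hom a b), Rp a b f ->
           deg a <= deg b /\ (deg a = deg b <-> is_identity f)) /\
       (forall a b (f : Hom a b), Rm a b f ->
           deg b <= deg a /\ (deg a = deg b <-> is_identity f)))].

Definition dmor (m n : nat) : Type :=
  {a : {ffun 'I_m.+1 -> 'I_n.+1} |
     [forall i : 'I_m.+1, forall j : 'I_m.+1, (i <= j) ==> (a i <= a j)]}.

Definition dapp m n (a : dmor m n) (i : 'I_m.+1) : 'I_n.+1 := (sval a) i.

Lemma dmono m n (a : dmor m n) (i j : 'I_m.+1) : i <= j -> dapp a i <= dapp a j.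
Proof. by move=> hij; move: (svalP a) => /forallP/(_ i)/forallP/(_ j)/implyP; apply. Qed.

Definition dcomp m n p (b : dmor n p) (a : dmor m n) : dmor m p.
Proof.
exists [ffun i => dapp b (dapp a i)].
apply/forallP => i; apply/forallP => j; apply/implyP => hij; rewrite !ffunE.
by apply: dmono; apply: dmono.
Defined.

Definition did m : dmor m m.
Proof. by exists [ffun i => i]; apply/forallP => i; apply/forallP => j; rewrite !ffunE; apply/implyP. Defined.

Definition dval m n (a : dmor m n) (k : nat) : nat := dapp a (inord k).
(* the indices j (0-based) with alpha(k) <= j < alpha(k+1), i.e. the paper's
   alpha(i-1) < j <= alpha(i) for i = k+1, j shifted by one *)
Definition drange m n (a : dmor m n) (k : nat) : seq nat :=
  iota (dval a k) (dval a k.+1 - dval a k).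

Definition dsurj m n (a : dmor m n) : Prop := forall j : 'I_n.+1, exists i, dapp a i = j.

Definition dmono_family m (fam : seq {n : nat & dmor m n}) : Prop :=
  forall k (b b' : dmor k m),
    (forall s, List.In s fam -> dcomp (projT2 s) b = dcomp (projT2 s) b') -> b = b'.

Lemma dval_comp m n p (b : dmor n p) (a : dmor m n) k :
  dval (dcomp b a) k = dval b (dval a k).
Proof. by rewrite /dval /dcomp /dapp /= ffunE inord_val. Qed.

Lemma dval_mono m n (a : dmor m n) j k : j <= k -> k <= m -> dval a j <= dval a k.
Proof. by move=> hjk hk; apply: dmono; rewrite !inordK; lia. Qed.

Lemma dval_le m n (a : dmor m n) k : dval a k <= n.
Proof. by rewrite /dval -ltnS ltn_ord. Qed.

Lemma telescope (fb : nat -> nat) a len :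
  (forall j k, a <= j -> j <= k -> k <= a + len -> fb j <= fb k) ->
  flatten [seq iota (fb j) (fb j.+1 - fb j) | j <- iota a len]
  = iota (fb a) (fb (a + len) - fb a).
Proof.
elim: len a => [|len IH] a H /=; first by rewrite addn0 subnn.
rewrite IH; last by move=> j k hj hjk hk; apply: H; lia.
have h1 : fb a <= fb a.+1 by apply: H; lia.
have h2 : fb a.+1 <= fb (a + len.+1) by apply: H; lia.
rewrite addSnnS.
rewrite -{2}(subnKC h1) -iotaD; congr iota; lia.
Qed.

Section Theta.
Variable C : catData.

(* the object [m](c_1,...,c_m) is the list [c_1;...;c_m], m = size *)
Definition thOb := seq (Ob C).
Definition obi (x : thOb) (i : 'I_(size x)) : Ob C := tnth (in_tuple x) i.
Arguments obi : clear implicits.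

(* a morphism (alpha, {f_i}); f_i is the list of (j, f_ij) for j in the
   range alpha(i-1) < j <= alpha(i), in increasing order of j *)
Record thHom (x y : thOb) := ThHom {
  th_a : dmor (size x) (size y);
  th_f : forall i : 'I_(size x), seq {j : 'I_(size y) & Hom (obi x i) (obi y j)};
  th_ok : [forall i : 'I_(size x),
             [seq nat_of_ord (projT1 p) | p <- th_f i] == drange th_a i] }.

Definition thcomp_f x y z (g : thHom y z) (f : thHom x y) (i : 'I_(size x)) :
  seq {k : 'I_(size z) & Hom (obi x i) (obi z k)} :=
  flatten [seq [seq existT (fun k => Hom (obi x i) (obi z k)) (projT1 q)
                      (comp (projT2 q) (projT2 p)) | q <- th_f g (projT1 p)]
          | p : {j : 'I_(size y) & Hom (obi x i) (obi y j)} <- th_f f i].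

Lemma thcomp_ok x y z (g : thHom y z) (f : thHom x y) :
  [forall i : 'I_(size x),
     [seq nat_of_ord (projT1 p) | p <- thcomp_f g f i]
       == drange (dcomp (th_a g) (th_a f)) i].
Proof.
apply/forallP => i; apply/eqP.
rewrite /thcomp_f map_flatten -map_comp.
transitivity (flatten [seq drange (th_a g) (nat_of_ord (projT1 p)) | p <- th_f f i]).
  congr flatten; apply: eq_map => p /=.
  rewrite -map_comp -(eqP (forallP (th_ok g) (projT1 p))).
  by apply: eq_map.
rewrite (map_comp (drange (th_a g)) (fun p => nat_of_ord (projT1 p))).
rewrite (eqP (forallP (th_ok f) i)).
rewrite {1}/drange /drange telescope; last first.
  move=> j k _ hjk hk; apply: dval_mono => //.
  apply: leq_trans hk _.
  have : dval (th_a f) i <= dval (th_a f) i.+1 by apply: dval_mono; have := ltn_ord i; lia.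
  have := dval_le (th_a f) i.+1; lia.
rewrite !dval_comp subnKC //; apply: dval_mono; have := ltn_ord i; lia.
Qed.

Definition thcomp x y z (g : thHom y z) (f : thHom x y) : thHom x z :=
  ThHom (thcomp_ok g f).

Lemma thid_ok x :
  [forall i : 'I_(size x),
     [seq nat_of_ord (projT1 p)
        | p <- [:: existT (fun j : 'I_(size x) => Hom (obi x i) (obi x j)) i (idm (obi x i))]]
       == drange (did (size x)) i].
Proof.
apply/forallP => i; rewrite /drange /dval /dapp /= !ffunE !inordK; try (have := ltn_ord i; lia).
by rewrite subSnn.
Qed.

Definition thid x : thHom x x := ThHom (thid_ok x).

End Theta.
Arguments obi {C} x i.

Definition ThetaC (C : catData) : catData := @CatData (thOb C) (@thHom C) (@thid C) (@thcomp C).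

Definition ThetaMinus (C : catData) (Cm : forall a b : Ob C, Hom a b -> Prop) :
  forall x y : Ob (ThetaC C), Hom x y -> Prop :=
  fun x y (f : thHom x y) =>
    dsurj (th_a f) /\
    forall i : 'I_(size x), List.Forall (fun p : {j : 'I_(size y) & Hom (obi x i) (obi y j)} =>
                   Cm _ _ (projT2 p)) (th_f f i).

Definition ThetaPlus (C : catData) (Cp : forall c : Ob C, mmor c -> Prop) :
  forall x : Ob (ThetaC C), mmor x -> Prop :=
  fun x fam =>
    dmono_family [seq existT (fun n => dmor (size x) n) (size (projT1 s)) (th_a (projT2 s))
                 | s : {y : thOb C & thHom x y} <- fam] /\
    forall i : 'I_(size x),
      Cp (obi x i)
         (flatten [seq [seq existT (fun d => Hom (obi x i) d) (obi (projT1 s) (projT1 q)) (projT2 q)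
                       | q <- th_f (projT2 s) i]
                  | s : {y : thOb C & thHom x y} <- fam]).

Definition theta_deg (C : catData) (deg : Ob C -> nat) (x : Ob (ThetaC C)) : nat :=
  size x + \sum_(c <- x) deg c.

(** A morphism [[m](c) -> [n](d)] of [Theta C] is a map [alpha] of [Delta]
   together with, at each [i], a multimorphism of [C(star)] out of [c_i], and every
   condition on [Theta C] is checked index-wise from the one on [C].  For the degree
   conditions: a monomorphic family of maps of [Delta] is jointly injective on
   points, so [i |-> sum_s alpha_s(i)] is strictly increasing and [m <= sum_s n_s],
   while summing the degree bounds of [C] over [i] bounds [sum_i deg c_i].

   To factor a family [(alpha_s, f_s)_s] out of [[m](c)], let [sigma(k)] be the
   number of [i < k] at which the tuple [(alpha_s(i))_s] changes between [i] and
   [i+1].  Then [sigma] is a surjection [[m] -> [k]], every [alpha_s] factors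
   through it by a jointly monic family, and the middle object is
   [[k](x_1, ..., x_k)] where [x_l] is the middle object of the factorisation in [C]
   of the components of [(f_s)_s] at the [l]-th jump.  Conversely, any
   factorisation must identify exactly the points with the same tuple, which forces
   its [Delta]-part to be [sigma], and the uniqueness of factorisations in [C] then
   pins down every component.  The Reedy structure is the restriction to
   single-output multimorphisms. *)

From mathcomp Require Import all_boot zify.
From Stdlib Require Import Permutation Eqdep ClassicalEpsilon FunctionalExtensionality.

Set Implicit Arguments.
Unset Strict Implicit.
Unset Printing Implicit Defensive.

Lemma eq_existT_app (A : Type) (P : A -> Type) (R : Type) (F : forall a, P a -> R)
  a a' (p : P a) (p' : P a') : existT P a p = existT P a' p' -> F a p = F a' p'.
Proof. by move=> e; move: (f_equal (fun s => F (projT1 s) (projT2 s)) e). Qed.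

Lemma eq_existT_map (A : Type) (P Q : A -> Type) (F : forall a, P a -> Q a)
  a a' (p : P a) (p' : P a') : existT P a p = existT P a' p' ->
  existT Q a (F a p) = existT Q a' (F a' p').
Proof. by move=> e; move: (f_equal (fun s => existT Q (projT1 s) (F _ (projT2 s))) e). Qed.

Lemma eq_existT_pair (A : Type) (P Q : A -> Type) a a' (p : P a) (p' : P a')
  (q : Q a) (q' : Q a') :
  existT P a p = existT P a' p' -> existT Q a q = existT Q a' q' ->
  existT (fun a => (P a * Q a)%type) a (p, q) = existT _ a' (p', q').
Proof.
move=> e1 e2; have ea : a = a' by exact: (f_equal (@projT1 _ _) e1).
subst a'; move: (inj_pair2 _ _ _ _ _ e1) (inj_pair2 _ _ _ _ _ e2) => -> -> //.
Qed.

Lemma eq_existT_prop (A : Type) (P : A -> Type) (Q : forall a, P a -> Prop)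
  a a' (p : P a) (p' : P a') : existT P a p = existT P a' p' -> Q a' p' -> Q a p.
Proof.
move=> e; have ea : a = a' by exact: (f_equal (@projT1 _ _) e).
by subst a'; move: (inj_pair2 _ _ _ _ _ e) => ->.
Qed.

Lemma existT_cast (A : Type) (P : A -> Type) a a' (e : a' = a) (p : P a) :
  exists p' : P a', existT P a' p' = existT P a p.
Proof. by subst a'; exists p. Qed.

Lemma existT_eta (A : Type) (P : A -> Type) (s : sigT P) a p :
  s = existT P a p -> existT P (projT1 s) (projT2 s) = existT P a p.
Proof. by case: s. Qed.

Lemma dependent_choice (I : Type) (T : I -> Type) (R : forall i, T i -> Prop) :
  (forall i, exists t, R i t) -> exists f : forall i, T i, forall i, R i (f i).
Proof.
move=> H; exists (fun i => proj1_sig (constructive_indefinite_description _ (H i))).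
by move=> i; exact: (proj2_sig (constructive_indefinite_description _ (H i))).
Qed.

Lemma In_nthP (A : Type) (d : A) (s : seq A) y :
  List.In y s <-> exists n, n < size s /\ nth d s n = y.
Proof.
elim: s y => [|a s IH] y /=; first by split=> // [[n []]].
split.
- case=> [<-|/IH [n [hn <-]]]; first by exists 0.
  by exists n.+1; split.
- by case=> [[|n]] [hn <-]; [left|right; apply/IH; exists n].
Qed.

Lemma In_mem (T : eqType) (a : T) (s : seq T) : a \in s -> List.In a s.
Proof. by elim: s => //= b s IH; rewrite in_cons => /orP [/eqP ->|/IH h]; [left|right]. Qed.

Lemma Forall_In (A : Type) (P : A -> Prop) s x : List.Forall P s -> List.In x s -> P x.
Proof. by move=> /List.Forall_forall; apply. Qed.

Lemma Forall_map (A B : Type) (P : B -> Prop) (f : A -> B) (s : seq A) :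
  (forall x, List.In x s -> P (f x)) -> List.Forall P (map f s).
Proof. by move=> H; apply/List.Forall_forall => y /List.in_map_iff [x [<- /H]]. Qed.

Lemma Forall_flatten (A : Type) (P : A -> Prop) (ss : seq (seq A)) :
  (forall s, List.In s ss -> List.Forall P s) -> List.Forall P (flatten ss).
Proof. by move=> H; apply/List.Forall_concat/List.Forall_forall. Qed.

Lemma map_eq_In (A B : Type) (f g : A -> B) (s : seq A) :
  map f s = map g s <-> forall a, List.In a s -> f a = g a.
Proof.
elim: s => [|a s IH] /=; first by split.
split.
- case=> e1 /IH e2 b [<-|hb] //; exact: e2.
- by move=> H; rewrite (H a (or_introl erefl)); congr cons; apply/IH => b hb; apply: H; right.
Qed.

Lemma flatten_map_seq1 (A B : Type) (f : A -> B) (s : seq A) :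
  flatten [seq [:: f a] | a <- s] = map f s.
Proof. by elim: s => //= a s ->. Qed.

Lemma flatten_map_flatten (A B D : Type) (s : seq A) (H : A -> seq B) (G : B -> seq D) :
  flatten (map G (flatten (map H s))) = flatten (map (fun a => flatten (map G (H a))) s).
Proof. by elim: s => //= a s IH; rewrite map_cat flatten_cat IH. Qed.

Lemma nth_map_filter (T U : Type) (d : T) (du : U) (f : T -> U) (P : pred T) (s : seq T) n :
  n < size s -> P (nth d s n) ->
  nth du (map f (filter P s)) (count P (take n s)) = f (nth d s n).
Proof.
elim: s n => [|a s IH] [|n] //= hn; first by move=> ->.
by case: (P a) => /= hp; rewrite IH.
Qed.

Lemma map_nth_enum (T : Type) (d : T) (s : seq T) k : size s = k ->
  [seq nth d s (nat_of_ord n) | n <- enum 'I_k] = s.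
Proof.
move=> <-; rewrite (map_comp (nth d s) val) val_enum_ord.
by rewrite -/(mkseq (nth d s) (size s)) mkseq_nth.
Qed.

Lemma cat_app (A : Type) (s t : seq A) : s ++ t = List.app s t.
Proof. by elim: s => //= a s ->. Qed.

Lemma perm_flatten (A : Type) (ss ss' : seq (seq A)) :
  Permutation ss ss' -> Permutation (flatten ss) (flatten ss').
Proof.
elim=> //= [x l l' _ IH|x y l|l l' l'' _ IH1 _ IH2].
- exact: Permutation_app_head.
- by rewrite !catA !cat_app; apply: Permutation_app_tail; exact: Permutation_app_comm.
- exact: Permutation_trans IH1 IH2.
Qed.

Lemma perm_flatten_map (A T : Type) (F G : T -> seq A) (s : seq T) :
  (forall t, Permutation (F t) (G t)) ->
  Permutation (flatten (map F s)) (flatten (map G s)).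
Proof. by move=> H; elim: s => //= t s IH; exact: Permutation_app. Qed.

Lemma perm_flatten_cat (A T : Type) (F G : T -> seq A) (s : seq T) :
  Permutation (flatten [seq F t ++ G t | t <- s]) (flatten (map F s) ++ flatten (map G s)).
Proof.
elim: s => [|t s IH] //=.
rewrite -!catA !cat_app; apply: Permutation_app_head.
apply: Permutation_trans; first by apply: Permutation_app_head; rewrite -?cat_app; exact: IH.
rewrite -!cat_app !catA !cat_app; apply: Permutation_app_tail; exact: Permutation_app_comm.
Qed.

Lemma perm_flatten_exchange (A J T : Type) (X : J -> T -> seq A) (sj : seq J) (st : seq T) :
  Permutation (flatten [seq flatten [seq X j t | t <- st] | j <- sj])
              (flatten [seq flatten [seq X j t | j <- sj] | t <- st]).
Proof.
elim: sj => [|j sj IH] /=; first by elim: st.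
apply: Permutation_trans; first by apply: Permutation_app_head; exact: IH.
apply: Permutation_sym.
exact: (perm_flatten_cat (fun t => X j t) (fun t => flatten [seq X j0 t | j0 <- sj]) st).
Qed.

Lemma leq_sum_In (I : Type) (s : seq I) (F G : I -> nat) :
  (forall i, List.In i s -> F i <= G i) -> \sum_(i <- s) F i <= \sum_(i <- s) G i.
Proof.
elim: s => [|a s IH] hle; first by rewrite !big_nil.
rewrite !big_cons; apply: leq_add; first by apply: hle; left.
by apply: IH => i hi; apply: hle; right.
Qed.

Lemma eq_sum_leq_In (I : Type) (s : seq I) (F G : I -> nat) :
  (forall i, List.In i s -> F i <= G i) -> \sum_(i <- s) F i = \sum_(i <- s) G i ->
  forall i, List.In i s -> F i = G i.
Proof.
elim: s => [|a s IH] hle heq i //=; rewrite !big_cons in heq.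
have hs : \sum_(i <- s) F i <= \sum_(i <- s) G i.
  by apply: leq_sum_In => j hj; apply: hle; right.
have ha := hle a (or_introl erefl).
case=> [<-|hi]; first by lia.
apply: IH => //; first by move=> j hj; apply: hle; right.
lia.
Qed.

Lemma eq_sum_leq (I : finType) (F G : I -> nat) :
  (forall i, F i <= G i) -> \sum_i F i = \sum_i G i -> forall i, F i = G i.
Proof.
move=> hle heq i; have : \sum_i (G i - F i) == 0 by rewrite sumnB // heq subnn.
by rewrite sum_nat_eq0 => /forallP/(_ i)/eqP; have := hle i; lia.
Qed.

Lemma leq_sum_subrange (G : nat -> nat) a b n :
  a <= b -> b <= n -> \sum_(a <= j < b) G j <= \sum_(0 <= j < n) G j.
Proof.
move=> hab hbn; rewrite (big_cat_nat (n:=a) (m:=0) (p:=n)) //; last exact: leq_trans hbn.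
by rewrite (big_cat_nat (n:=b) (m:=a) (p:=n)) //=; lia.
Qed.

Lemma incr_add_leq (f : nat -> nat) m :
  (forall i, i < m -> f i < f i.+1) -> forall i k, i + k <= m -> f i + k <= f (i + k).
Proof.
move=> hf i; elim=> [|k IH] hk; first by rewrite !addn0.
by rewrite addnS in hk *; have := IH (ltnW hk); have := hf _ hk; lia.
Qed.

Lemma step1_add_leq (f : nat -> nat) m :
  (forall i, i < m -> f i.+1 <= (f i).+1) -> forall i k, i + k <= m -> f (i + k) <= f i + k.
Proof.
move=> hf i; elim=> [|k IH] hk; first by rewrite !addn0.
by rewrite addnS in hk *; have := IH (ltnW hk); have := hf _ hk; lia.
Qed.

Lemma step1_surj (f : nat -> nat) : f 0 = 0 -> (forall k, f k.+1 <= (f k).+1) ->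
  forall n l, l <= f n -> exists i, i <= n /\ f i = l.
Proof.
move=> f0 fs; elim=> [|n IH] l hl; first by exists 0; split=> //; lia.
case: (leqP l (f n)) => h; first by case: (IH l h) => i [hi e]; exists i; split=> //; lia.
by exists n.+1; split=> //; have := fs n; lia.
Qed.

Lemma step1_jump (f : nat -> nat) : (forall k, f k.+1 <= (f k).+1) ->
  forall n l, f 0 <= l -> l < f n -> exists i, i < n /\ f i = l /\ f i.+1 = l.+1.
Proof.
move=> fs; elim=> [|n IH] l h0 hl; first by lia.
case: (ltnP l (f n)) => h; first by case: (IH l h0 h) => i [hi e]; exists i; split=> //; lia.
by exists n; split=> //; have := fs n; lia.
Qed.

(** * The simplex category *)

Lemma dmor_ext m n (a b : dmor m n) :
  (forall k, k <= m -> dval a k = dval b k) -> a = b.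
Proof.
case: a b => [a Ha] [b Hb] H.
have e : a = b.
  apply/ffunP => i; apply: val_inj.
  by have := H i (ltnSE (ltn_ord i)); rewrite /dval /dapp /= inord_val.
subst b; congr exist; exact: eq_irrelevance.
Qed.

Lemma dval_dapp m n (a : dmor m n) (i : 'I_m.+1) : dval a i = dapp a i.
Proof. by rewrite /dval inord_val. Qed.

Definition mk_dmor m n (f : nat -> nat)
  (Hm : forall i j, i <= j -> j <= m -> f i <= f j) (Hb : forall i, i <= m -> f i <= n) :
  dmor m n.
Proof.
exists [ffun i : 'I_m.+1 => (inord (f i) : 'I_n.+1)].
apply/forallP => i; apply/forallP => j; apply/implyP => hij; rewrite !ffunE.
have hi := ltnSE (ltn_ord i); have hj := ltnSE (ltn_ord j).
by rewrite !inordK ?ltnS ?Hb //; exact: Hm.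
Defined.

Lemma dval_mk m n f Hm Hb k : k <= m -> dval (@mk_dmor m n f Hm Hb) k = f k.
Proof.
move=> hk; have e : nat_of_ord (inord k : 'I_m.+1) = k by rewrite inordK // ltnS.
by rewrite /dval /dapp /= ffunE e inordK // ltnS Hb.
Qed.

Lemma dval_did m k : k <= m -> dval (did m) k = k.
Proof. by move=> hk; rewrite /dval /dapp /= ffunE inordK // ltnS. Qed.

Definition dconst m n (j : nat) (hj : j <= n) : dmor m n :=
  @mk_dmor m n (fun _ => j) (fun _ _ _ _ => leqnn j) (fun _ _ => hj).

Lemma dsurjP m n (a : dmor m n) :
  dsurj a <-> forall j, j <= n -> exists i, i <= m /\ dval a i = j.
Proof.
split.
- move=> H j hj; case: (H (inord j)) => i hi; exists i; split; first exact: ltnSE (ltn_ord i).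
  by rewrite dval_dapp hi inordK // ltnS.
- move=> H j; case: (H j (ltnSE (ltn_ord j))) => i [hi e].
  by exists (inord i); apply: ord_inj; rewrite -e /dval.
Qed.

Definition djoint_inj m (fam : seq {n : nat & dmor m n}) : Prop :=
  forall i i', i <= m -> i' <= m ->
   (forall s, List.In s fam -> dval (projT2 s) i = dval (projT2 s) i') -> i = i'.

(* Testing against maps out of [0] detects points. *)
Lemma dmono_familyP m fam : dmono_family fam <-> @djoint_inj m fam.
Proof.
split.
- move=> H i i' hi hi' E.
  have Hc : forall s, List.In s fam ->
      dcomp (projT2 s) (dconst 0 hi) = dcomp (projT2 s) (dconst 0 hi').
    by move=> s hs; apply: dmor_ext => k hk; rewrite !dval_comp !dval_mk //; exact: E.
  by have := f_equal (fun b => dval b 0) (H 0 _ _ Hc); rewrite !dval_mk.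
- move=> H k b b' E; apply: dmor_ext => j hj; apply: H; try exact: dval_le.
  by move=> s hs; rewrite -!dval_comp (E s hs).
Qed.

Lemma dval_incr_id m n (a : dmor m n) :
  (forall i, i < m -> dval a i < dval a i.+1) -> n <= m -> forall k, k <= m -> dval a k = k.
Proof.
move=> ha hnm k hk; have := @incr_add_leq _ _ ha 0 k; have := @incr_add_leq _ _ ha k (m - k).
by rewrite add0n subnKC //; have := dval_le a m; lia.
Qed.

Section Surjections.
Variables (m n : nat) (a : dmor m n).
Hypothesis a_surj : dsurj a.

Lemma dsurj_dval0 : dval a 0 = 0.
Proof.
move/dsurjP: a_surj => /(_ 0 (leq0n n)) [i [hi e]].
by have := dval_mono a (leq0n i) hi; lia.
Qed.

Lemma dsurj_dval_last : dval a m = n.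
Proof.
move/dsurjP: a_surj => /(_ n (leqnn n)) [i [hi e]].
by have := dval_mono a hi (leqnn m); have := dval_le a m; lia.
Qed.

Lemma dsurj_dvalS i : i < m -> dval a i.+1 <= (dval a i).+1.
Proof.
move=> him; rewrite leqNgt; apply/negP => hlt.
move/dsurjP: a_surj => /(_ (dval a i).+1) [].
  by have := dval_le a i.+1; lia.
move=> k [hk e]; case: (leqP k i) => hki.
  by have := dval_mono a hki (ltnW him); lia.
by have := dval_mono a hki hk; lia.
Qed.

Lemma dsurj_dval_leq i : i <= m -> dval a i <= i.
Proof. by have := @step1_add_leq _ _ dsurj_dvalS 0 i; rewrite add0n dsurj_dval0 add0n. Qed.

Lemma dsurj_leq : n <= m.
Proof. by rewrite -dsurj_dval_last; exact: dsurj_dval_leq. Qed.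

Lemma dsurj_id : m <= n -> forall k, k <= m -> dval a k = k.
Proof.
move=> hmn k hk; have := @step1_add_leq _ _ dsurj_dvalS k (m - k).
by rewrite subnKC // dsurj_dval_last; have := dsurj_dval_leq hk; lia.
Qed.

Lemma dsurj_drange (i : 'I_m) :
  drange a i = if dval a i.+1 == dval a i then [::] else [:: dval a i].
Proof.
have := dsurj_dvalS (ltn_ord i); have := dval_mono a (leqnSn i) (ltn_ord i).
rewrite /drange; case: eqP => [->|ne] h1 h2; first by rewrite subnn.
by have -> : dval a i.+1 - dval a i = 1 by lia.
Qed.

End Surjections.

Lemma drange_id m n (a : dmor m n) (i : 'I_m) :
  (forall k, k <= m -> dval a k = k) -> drange a i = [:: nat_of_ord i].
Proof. by move=> ha; rewrite /drange !ha ?subSnn //; exact: ltnW. Qed.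

Lemma sum_dranges m n (a : dmor m n) (G : nat -> nat) :
  \sum_(i < m) \sum_(j <- drange a i) G j = \sum_(dval a 0 <= j < dval a m) G j.
Proof.
rewrite -(big_mkord xpredT (fun i => \sum_(j <- drange a i) G j)).
rewrite -(big_map (fun i => drange a i) xpredT (fun r => \sum_(j <- r) G j)) -big_flatten /=.
rewrite /index_iota subn0.
have := @telescope (dval a) 0 m; rewrite add0n /drange => ->; first by [].
by move=> j k _ hjk hk; exact: dval_mono.
Qed.

(** * The category [Theta C] *)

Section ThetaCategory.
Variable C : catData.
Implicit Types x y z : thOb C.

(* A component is compared through its plain data (index, target, arrow), which
   does not mention the dependent type of the target index. *)
Definition enc_entry x y (i : 'I_(size x)) (p : {j : 'I_(size y) & Hom (obi x i) (obi y j)}) :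
  nat * {d : Ob C & Hom (obi x i) d} :=
  (nat_of_ord (projT1 p), existT _ (obi y (projT1 p)) (projT2 p)).

Definition th_enc x y (f : thHom x y) (i : 'I_(size x)) := map (@enc_entry x y i) (th_f f i).

Definition enc_entry_wf y (c : Ob C) (e : nat * {d : Ob C & Hom c d}) : Prop :=
  exists j : 'I_(size y), nat_of_ord j = e.1 /\ projT1 e.2 = obi y j.

Lemma enc_entry_inj x y i : injective (@enc_entry x y i).
Proof.
case=> [j h] [j' h'] E.
have /= /ord_inj ej := f_equal fst E; subst j'.
by have /= e := f_equal snd E; rewrite (inj_pair2 _ _ _ _ _ e).
Qed.

Lemma thHom_eq x y (f g : thHom x y) :
  th_a f = th_a g -> (forall i, th_f f i = th_f g i) -> f = g.
Proof.
case: f g => [a F ok] [b G ok'] /= eab eFG; subst b.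
have e : F = G by apply: functional_extensionality_dep.
by subst G; congr ThHom; exact: eq_irrelevance.
Qed.

Lemma thHom_ext x y (f g : thHom x y) :
  (forall k, k <= size x -> dval (th_a f) k = dval (th_a g) k) ->
  (forall i, th_enc f i = th_enc g i) -> f = g.
Proof.
move=> Ha Hf; apply: thHom_eq; first exact: dmor_ext.
by move=> i; apply: (inj_map (@enc_entry_inj x y i)); exact: Hf.
Qed.

Lemma th_enc_fst x y (f : thHom x y) i : map fst (th_enc f i) = drange (th_a f) i.
Proof. by rewrite /th_enc -map_comp -(eqP (forallP (th_ok f) i)). Qed.

Lemma th_enc_wf x y (f : thHom x y) i : List.Forall (@enc_entry_wf y (obi x i)) (th_enc f i).
Proof. by apply: Forall_map => [[j h]] _ /=; exists j. Qed.

Lemma enc_entries_lift x y i (L : seq (nat * {d : Ob C & Hom (obi x i) d})) :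
  List.Forall (@enc_entry_wf y (obi x i)) L ->
  exists L' : seq {j : 'I_(size y) & Hom (obi x i) (obi y j)}, map (@enc_entry x y i) L' = L.
Proof.
elim: L => [|[n [d h]] L IH] H; first by exists [::].
inversion H as [|e l [j [hj hd]] HL]; subst.
case: (IH HL) => L' eL; simpl in hd, hj; subst d n.
by exists (existT _ j h :: L'); rewrite /= eL.
Qed.

Lemma thHom_of_enc x y (a : dmor (size x) (size y))
  (E : forall i : 'I_(size x), seq (nat * {d : Ob C & Hom (obi x i) d})) :
  (forall i, map fst (E i) = drange a i) ->
  (forall i, List.Forall (@enc_entry_wf y (obi x i)) (E i)) ->
  exists f : thHom x y, th_a f = a /\ forall i, th_enc f i = E i.
Proof.
move=> Hfst Hwf.
have [F HF] := dependent_choice (fun i => enc_entries_lift (Hwf i)).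
have ok : [forall i : 'I_(size x), [seq nat_of_ord (projT1 p) | p <- F i] == drange a i].
  by apply/forallP => i; apply/eqP; rewrite -Hfst -HF -map_comp.
by exists (ThHom ok).
Qed.

Lemma th_f_single x y (f : thHom x y) (i : 'I_(size x)) k : drange (th_a f) i = [:: k] ->
  exists (j : 'I_(size y)) (h : Hom (obi x i) (obi y j)),
    nat_of_ord j = k /\ th_f f i = [:: existT _ j h].
Proof.
move=> hr; have := eqP (forallP (th_ok f) i); rewrite hr.
by case: (th_f f i) => [|[j h] [|p' l]] //= [e]; exists j, h.
Qed.

Lemma th_f_nil x y (f : thHom x y) (i : 'I_(size x)) :
  drange (th_a f) i = [::] -> th_f f i = [::].
Proof. by move=> hr; have := eqP (forallP (th_ok f) i); rewrite hr; case: (th_f f i). Qed.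

Lemma th_enc_comp x y z (g : thHom y z) (f : thHom x y) i :
  th_enc (thcomp g f) i =
  flatten [seq [seq (q.1, existT (fun d => Hom (obi x i) d) (projT1 q.2)
                                 (comp (projT2 q.2) (projT2 p)))
                | q : nat * {d : Ob C & Hom (obi y (projT1 p)) d} <- th_enc g (projT1 p)]
           | p : {j : 'I_(size y) & Hom (obi x i) (obi y j)} <- th_f f i].
Proof.
rewrite /th_enc /= /thcomp_f map_flatten -map_comp; congr flatten; apply: eq_map => p /=.
by rewrite -!map_comp.
Qed.

Lemma theta_is_category : is_category C -> is_category (ThetaC C).
Proof.
case=> idl idr ass; split.
- move=> a b f; apply: thHom_eq.
    by apply: dmor_ext => k hk; rewrite /= dval_comp dval_did // dval_le.
  move=> i /=; rewrite /thcomp_f /= flatten_map_seq1.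
  by rewrite -[RHS]map_id; apply: eq_map => -[j h] /=; rewrite idl.
- move=> a b f; apply: thHom_eq.
    by apply: dmor_ext => k hk; rewrite /= dval_comp dval_did.
  move=> i /=; rewrite /thcomp_f /= cats0.
  by rewrite -[RHS]map_id; apply: eq_map => -[j h] /=; rewrite idr.
- move=> a b c d f g h; apply: thHom_eq.
    by apply: dmor_ext => k hk; rewrite /= !dval_comp.
  move=> i /=; rewrite /thcomp_f /= flatten_map_flatten; congr flatten.
  apply: eq_map => p0 /=; rewrite map_flatten -!map_comp; congr flatten.
  apply: eq_map => q /=; rewrite -map_comp; apply: eq_map => r /=.
  by rewrite ass.
Qed.

Lemma thOb_eq y x : size y = size x ->
  (forall i : 'I_(size x), exists j : 'I_(size y), nat_of_ord j = i /\ obi y j = obi x i) ->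
  y = x.
Proof.
case: x => [|c x'] hs H; first by move: H; case: y hs.
apply: (@eq_from_nth _ c) => // n hn.
have hn' : n < size (c :: x') by rewrite -hs.
case: (H (Ordinal hn')) => j [hj e].
by move: e; rewrite /obi !(tnth_nth c) /= hj.
Qed.

Lemma is_identity_thOb x y (f : thHom x y) :
  is_identity (f : Hom (x : Ob (ThetaC C)) y) -> y = x.
Proof. by move=> e; exact: (f_equal (@projT1 _ _) e). Qed.

Lemma theta_is_identity x y (f : thHom x y) :
  size y = size x -> (forall k, k <= size x -> dval (th_a f) k = k) ->
  (forall i (j : 'I_(size y)) (h : Hom (obi x i) (obi y j)),
     nat_of_ord j = i -> th_f f i = [:: existT _ j h] -> is_identity h) ->
  is_identity (f : Hom (x : Ob (ThetaC C)) y).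
Proof.
move=> hs ha hid.
have he : forall i, th_enc f i =
    [:: (nat_of_ord i, existT (fun d => Hom (obi x i) d) (obi x i) (idm (obi x i)))].
  move=> i; case: (th_f_single (drange_id i ha)) => j [h [hj ef]].
  by rewrite /th_enc ef /enc_entry /= hj (hid _ _ _ hj ef).
have exy : y = x.
  apply: thOb_eq => // i.
  have := th_enc_wf f i; rewrite he => /List.Forall_forall /(_ _ (or_introl erefl)) [j [hj hd]].
  by exists j.
subst y; rewrite /is_identity; congr existT.
by apply: thHom_ext => [k hk|i]; rewrite ?ha ?dval_did ?he.
Qed.

End ThetaCategory.

(** * The wide sub(multi)categories [(Theta C)^-] and [(Theta C)^+(star)] *)

Section ThetaSub.
Variable C : catData.
Unset Implicit Arguments.
Variable Cm : forall a b : Ob C, Hom a b -> Prop.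
Variable Cp : forall c : Ob C, mmor c -> Prop.
Set Implicit Arguments.
Implicit Types x y z : thOb C.

Lemma theta_minus_wide : wide_subcategory Cm -> wide_subcategory (ThetaMinus Cm).
Proof.
case=> Hid Hcomp; split.
- move=> x; split.
    by apply/dsurjP => j hj; exists j; rewrite dval_did.
  by move=> i /=; constructor; [exact: Hid|constructor].
- move=> x y z f g [sf Ff] [sg Fg]; split.
    apply/dsurjP => j hj; move/dsurjP: sg => sg; case: (sg j hj) => k [hk <-].
    move/dsurjP: sf => sf; case: (sf k hk) => i [hi <-].
    by exists i; rewrite /= dval_comp.
  move=> i /=; rewrite /thcomp_f; apply: Forall_flatten => l.
  case/List.in_map_iff => p [<- hp]; apply: Forall_map => q hq /=.
  apply: Hcomp; first exact: (Forall_In (Ff i) hp).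
  exact: (Forall_In (Fg (projT1 p)) hq).
Qed.

(* The multimorphism [(f_sij)_(s,j)] of the definition of [(Theta C)^+(star)]. *)
Definition th_components x (fam : mmor (x : Ob (ThetaC C))) (i : 'I_(size x)) :
  mmor (obi x i) :=
  flatten [seq map snd (th_enc (projT2 s) i) | s <- fam].

Definition th_separating x (fam : mmor (x : Ob (ThetaC C))) : Prop :=
  forall i i', i <= size x -> i' <= size x ->
   (forall s, List.In s fam -> dval (th_a (projT2 s)) i = dval (th_a (projT2 s)) i') -> i = i'.

Lemma ThetaPlusP x (fam : mmor (x : Ob (ThetaC C))) :
  ThetaPlus Cp fam <-> th_separating fam /\ forall i, Cp (obi x i) (th_components fam i).
Proof.
have eL : forall i, th_components fam i =
    flatten [seq [seq existT (fun d => Hom (obi x i) d) (obi (projT1 s) (projT1 q)) (projT2 q)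
                 | q <- th_f (projT2 s) i] | s <- fam].
  by move=> i; congr flatten; apply: eq_map => s; rewrite /th_enc -map_comp.
have eP : dmono_family [seq existT (fun n => dmor (size x) n) (size (projT1 s)) (th_a (projT2 s))
                       | s : {y : thOb C & thHom x y} <- fam] <-> th_separating fam.
  rewrite dmono_familyP; split.
  - move=> H i i' hi hi' E; apply: H => // s /List.in_map_iff [s' [<- hs']]; exact: E.
  - move=> H i i' hi hi' E; apply: H => // s hs; apply: (E (existT _ _ _)).
    by apply/List.in_map_iff; exists s.
by split; case=> /eP h1 h2; split=> // i; rewrite ?eL // -eL.
Qed.

(* The data of [C(star)] whose composite is, up to order, the components at [i] of the
   composite family [mcomp g]. *)
Definition th_components_comp x
  (g : seq {p : {y : thOb C & thHom x y} & mmor (projT1 p : Ob (ThetaC C))})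
  (i : 'I_(size x)) : seq {p : {d : Ob C & Hom (obi x i) d} & mmor (projT1 p)} :=
  flatten [seq [seq existT (fun p : {d : Ob C & Hom (obi x i) d} => mmor (projT1 p))
                 (existT (fun d => Hom (obi x i) d) (obi (projT1 (projT1 q)) (projT1 e)) (projT2 e))
                 (th_components (projT2 q) (projT1 e))
               | e <- th_f (projT2 (projT1 q)) i] | q <- g].

Lemma th_components_comp_outputs x g i :
  map (@projT1 _ _) (@th_components_comp x g i) = th_components (map (@projT1 _ _) g) i.
Proof.
rewrite /th_components_comp /th_components map_flatten -!map_comp; congr flatten.
by apply: eq_map => q /=; rewrite /th_enc -!map_comp.
Qed.

Lemma perm_th_components_comp x g i :
  Permutation (mcomp (@th_components_comp x g i)) (th_components (@mcomp (ThetaC C) x g) i).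
Proof.
rewrite /mcomp /th_components_comp /th_components /= !flatten_map_flatten.
apply: perm_flatten_map => q /=.
set X := fun (e : {j : 'I_(size (projT1 (projT1 q))) &
                     Hom (obi x i) (obi (projT1 (projT1 q)) j)})
             (s : {w : thOb C & thHom (projT1 (projT1 q)) w}) =>
  [seq existT (fun d => Hom (obi x i) d) (projT1 r.2) (comp (projT2 r.2) (projT2 e))
  | r <- th_enc (projT2 s) (projT1 e)].
apply: (Permutation_trans (l' := flatten [seq flatten [seq X e s | s <- projT2 q]
                                          | e <- th_f (projT2 (projT1 q)) i])).
  apply: Permutation_refl'; rewrite -map_comp; congr (foldr _ _); apply: eq_map => e /=.
  rewrite /mprecomp map_flatten -map_comp; congr flatten; apply: eq_map => s /=.
  by rewrite /X -map_comp.
apply: Permutation_trans; first exact: perm_flatten_exchange.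
apply: Permutation_refl'; rewrite /mprecomp -map_comp.
congr (foldr _ _); apply: eq_map => s /=.
rewrite th_enc_comp map_flatten -map_comp; congr flatten; apply: eq_map => e /=.
by rewrite /X -map_comp.
Qed.

Section PlusWide.
Hypothesis Cp_wide : wide_submulticategory Cp.

Lemma theta_plus_id x : ThetaPlus Cp [:: existT (fun y => Hom (x : Ob (ThetaC C)) y) x (thid x)].
Proof.
case: Cp_wide => Hid _ _; apply/ThetaPlusP; split; last by move=> i; exact: Hid.
move=> i i' hi hi' E; have := E (existT _ x (thid x)) (or_introl erefl).
by rewrite /= !dval_did.
Qed.

Lemma theta_plus_comp x
  (g : seq {p : {y : thOb C & thHom x y} & mmor (projT1 p : Ob (ThetaC C))}) :
  @ThetaPlus C Cp x (map (@projT1 _ _) g) ->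
  List.Forall (fun q => @ThetaPlus C Cp (projT1 (projT1 q)) (projT2 q)) g ->
  ThetaPlus Cp (@mcomp (ThetaC C) x g).
Proof.
case: Cp_wide => _ Hcomp Hperm /ThetaPlusP [Pinj PCp] HF; apply/ThetaPlusP; split.
- move=> i i' hi hi' E; apply: Pinj => // s /List.in_map_iff [q [<- hq]].
  have [Qinj _] := proj1 (ThetaPlusP _) (Forall_In HF hq).
  apply: Qinj; try exact: dval_le.
  move=> t ht; rewrite -!dval_comp.
  apply: (E (existT _ (projT1 t) (thcomp (projT2 t) (projT2 (projT1 q))))).
  apply/List.in_concat; exists (mprecomp (projT2 q) (projT2 (projT1 q))); split.
    by apply/List.in_map_iff; exists q.
  by apply/List.in_map_iff; exists t.
- move=> i; apply: Hperm (perm_th_components_comp g i) _.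
  apply: Hcomp; first by rewrite th_components_comp_outputs.
  apply: Forall_flatten => l /List.in_map_iff [q [<- hq]]; apply: Forall_map => e he /=.
  by case/ThetaPlusP: (Forall_In HF hq) => _; apply.
Qed.

Lemma theta_plus_perm x (a a' : mmor (x : Ob (ThetaC C))) :
  Permutation a a' -> ThetaPlus Cp a -> ThetaPlus Cp a'.
Proof.
case: Cp_wide => _ _ Hperm hp /ThetaPlusP [Pinj PCp]; apply/ThetaPlusP; split.
  by move=> i i' hi hi' E; apply: Pinj => // s hs; apply: E; exact: Permutation_in hs.
move=> i; apply: Hperm (PCp i); rewrite /th_components.
by apply: perm_flatten; exact: Permutation_map.
Qed.

End PlusWide.

Lemma theta_plus_wide : wide_submulticategory Cp -> wide_submulticategory (ThetaPlus Cp).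
Proof.
move=> HCp; split; [exact: theta_plus_id|exact: theta_plus_comp|exact: theta_plus_perm].
Qed.

End ThetaSub.

(** * Degrees *)

Section ThetaDegree.
Variable C : catData.
Unset Implicit Arguments.
Variable Cm : forall a b : Ob C, Hom a b -> Prop.
Variable Cp : forall c : Ob C, mmor c -> Prop.
Variable deg : Ob C -> nat.
Set Implicit Arguments.
Implicit Types x y z : thOb C.

Definition deg_at y (j : nat) := nth 0 (map deg y) j.

Lemma deg_obi y (j : 'I_(size y)) : deg (obi y j) = deg_at y j.
Proof.
by rewrite /deg_at /obi (tnth_nth (tnth (in_tuple y) j)) /= (nth_map (tnth (in_tuple y) j)).
Qed.

Lemma theta_degE y : theta_deg deg y = size y + \sum_(j < size y) deg_at y j.
Proof.
by rewrite /theta_deg big_tnth; congr addn; apply: eq_bigr => j _; rewrite -deg_obi.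
Qed.

Lemma sum_deg_th_components x (fam : mmor (x : Ob (ThetaC C))) i :
  \sum_(p <- th_components fam i) deg (projT1 p) =
  \sum_(s <- fam) \sum_(j <- drange (th_a (projT2 s)) i) deg_at (projT1 s) j.
Proof.
rewrite /th_components big_flatten big_map; apply: eq_bigr => s _.
rewrite big_map /th_enc big_map -(eqP (forallP (th_ok (projT2 s)) i)) big_map.
by apply: eq_bigr => p _; rewrite /= deg_obi.
Qed.

Hypothesis Cp_deg : forall c (a : mmor c), Cp c a -> deg c <= \sum_(p <- a) deg (projT1 p).
Hypothesis Cp_deg_id : forall (c d : Ob C) (f : Hom c d),
  Cp c [:: existT (fun e => Hom c e) d f] -> (deg c = deg d <-> is_identity f).
Hypothesis Cm_deg : forall (c d : Ob C) (f : Hom c d), Cm c d f ->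
  deg d <= deg c /\ (deg c = deg d <-> is_identity f).

Lemma theta_plus_sum_deg x (fam : mmor (x : Ob (ThetaC C))) : ThetaPlus Cp fam ->
  \sum_(i < size x) deg_at x i <=
  \sum_(s <- fam) \sum_(dval (th_a (projT2 s)) 0 <= j < dval (th_a (projT2 s)) (size x))
                    deg_at (projT1 s) j.
Proof.
case/ThetaPlusP => _ PCp; apply: (@leq_trans (\sum_(i < size x) \sum_(s <- fam)
    \sum_(j <- drange (th_a (projT2 s)) i) deg_at (projT1 s) j)).
  by apply: leq_sum => i _; rewrite -deg_obi -sum_deg_th_components; exact: Cp_deg.
by rewrite exchange_big /=; apply: leq_sum => s _; rewrite sum_dranges.
Qed.

(* [i |-> sum_s alpha_s(i)] is strictly increasing, which bounds [m] by [sum_s n_s]. *)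
Lemma theta_plus_size x (fam : mmor (x : Ob (ThetaC C))) : ThetaPlus Cp fam ->
  size x <= \sum_(s <- fam) size (projT1 s).
Proof.
case/ThetaPlusP => Pinj _.
set T := fun i => \sum_(s <- fam) dval (th_a (projT2 s)) i.
have incr : forall i, i < size x -> T i < T i.+1.
  move=> i hi.
  have le : forall s, List.In s fam -> dval (th_a (projT2 s)) i <= dval (th_a (projT2 s)) i.+1.
    by move=> s _; apply: dval_mono.
  rewrite ltn_neqAle leq_sum_In // andbT; apply/eqP => e.
  by have := Pinj i i.+1 (ltnW hi) hi (eq_sum_leq_In le e); lia.
have := @incr_add_leq _ _ incr 0 (size x); rewrite !add0n => /(_ (leqnn _)).
have : T (size x) <= \sum_(s <- fam) size (projT1 s) by apply: leq_sum_In => s _; exact: dval_le.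
lia.
Qed.

Lemma theta_plus_deg x (fam : mmor (x : Ob (ThetaC C))) : ThetaPlus Cp fam ->
  theta_deg deg x <= \sum_(p <- fam) theta_deg deg (projT1 p).
Proof.
move=> HP; rewrite theta_degE.
have -> : \sum_(p <- fam) theta_deg deg (projT1 p) = \sum_(p <- fam) size (projT1 p) +
     \sum_(p <- fam) \sum_(j < size (projT1 p)) deg_at (projT1 p) j.
  by rewrite -big_split; apply: eq_bigr => p _; rewrite theta_degE.
apply: leq_add; first exact: theta_plus_size.
apply: (leq_trans (theta_plus_sum_deg HP)); apply: leq_sum => s _.
rewrite -(big_mkord xpredT (deg_at (projT1 s))).
by apply: leq_sum_subrange; [apply: dval_mono|apply: dval_le].
Qed.

Lemma theta_plus_deg_id x y (f : thHom x y) :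
  ThetaPlus Cp [:: existT (fun e => Hom (x : Ob (ThetaC C)) e) y f] ->
  (theta_deg deg x = theta_deg deg y <-> is_identity (f : Hom (x : Ob (ThetaC C)) y)).
Proof.
move=> HP; split; last by move/is_identity_thOb => e; subst y.
have HS := theta_plus_sum_deg HP; rewrite big_seq1 /= in HS.
have hsize : size x <= size y by have := theta_plus_size HP; rewrite big_seq1.
case/ThetaPlusP: HP => Pinj PCp.
have incr : forall i, i < size x -> dval (th_a f) i < dval (th_a f) i.+1.
  move=> i hi; rewrite ltn_neqAle dval_mono // andbT; apply/eqP => e.
  by have := Pinj i i.+1 (ltnW hi) hi (fun s => ltac:(by case=> [<-|])); lia.
have hsub : \sum_(dval (th_a f) 0 <= j < dval (th_a f) (size x)) deg_at y j <=
            \sum_(j < size y) deg_at y j.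
  rewrite -(big_mkord xpredT (deg_at y)).
  by apply: leq_sum_subrange; [apply: dval_mono|apply: dval_le].
rewrite !theta_degE => edeg.
have hsum := leq_trans HS hsub.
have esz : size y = size x.
  set Sx := \sum_(i < size x) deg_at x i in edeg hsum.
  set Sy := \sum_(j < size y) deg_at y j in edeg hsum.
  lia.
have ple : forall i : 'I_(size x), deg_at x i <= deg_at y i.
  move=> i; have := Cp_deg (PCp i); rewrite sum_deg_th_components big_seq1 -deg_obi.
  by rewrite (drange_id i (dval_incr_id incr (eq_leq esz))) big_seq1.
have eqs : \sum_(i < size x) deg_at x i = \sum_(i < size x) deg_at y i.
  by move: edeg hsum; rewrite esz; lia.
apply: theta_is_identity => // [|i j h hj ef]; first exact: dval_incr_id incr (eq_leq esz).
have Hc := PCp i; rewrite /th_components /= cats0 /th_enc ef /= in Hc.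
by apply: (Cp_deg_id Hc).1; rewrite !deg_obi hj (eq_sum_leq ple eqs).
Qed.

Lemma theta_minus_deg x y (f : thHom x y) : ThetaMinus Cm (f : Hom (x : Ob (ThetaC C)) y) ->
  theta_deg deg y <= theta_deg deg x /\
  (theta_deg deg x = theta_deg deg y <-> is_identity (f : Hom (x : Ob (ThetaC C)) y)).
Proof.
case=> hs HF.
have comp_deg : forall i (j : 'I_(size y)) (h : Hom (obi x i) (obi y j)),
    th_f f i = [:: existT _ j h] -> deg (obi y j) <= deg (obi x i) /\
      (deg (obi x i) = deg (obi y j) <-> is_identity h).
  move=> i j h ef; apply: Cm_deg.
  by have := HF i; rewrite ef => /List.Forall_forall /(_ _ (or_introl erefl)).
have ple : forall i : 'I_(size x), \sum_(j <- drange (th_a f) i) deg_at y j <= deg_at x i.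
  move=> i; rewrite (dsurj_drange hs); case: eqP => hne; first by rewrite big_nil.
  rewrite big_seq1; case: (@th_f_single _ _ _ f i (dval (th_a f) i)).
    by rewrite (dsurj_drange hs); case: eqP.
  by move=> j [h [<- ef]]; rewrite -!deg_obi; exact: (comp_deg _ _ _ ef).1.
have hsum : \sum_(j < size y) deg_at y j <= \sum_(i < size x) deg_at x i.
  rewrite -(big_mkord xpredT (deg_at y)); have := sum_dranges (th_a f) (deg_at y).
  by rewrite dsurj_dval0 // dsurj_dval_last // => <-; apply: leq_sum => i _.
have nm := dsurj_leq hs.
rewrite !theta_degE; split; first by lia.
split; last by move/is_identity_thOb => e; subst y.
move=> edeg; have esz : size y = size x by lia.
have aid := dsurj_id hs (eq_leq (esym esz)).
have ple' : forall i : 'I_(size x), deg_at y i <= deg_at x i.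
  by move=> i; have := ple i; rewrite (drange_id i aid) big_seq1.
have eqs : \sum_(i < size x) deg_at y i = \sum_(i < size x) deg_at x i.
  by move: edeg hsum; rewrite esz; lia.
apply: theta_is_identity => // i j h hj ef.
by apply: (comp_deg _ _ _ ef).2.1; rewrite !deg_obi hj (eq_sum_leq ple' eqs).
Qed.

End ThetaDegree.

(** * From multi-Reedy to Reedy *)

Lemma multi_reedy_is_reedy (D : catData) (Dm : forall a b : Ob D, Hom a b -> Prop)
  (Dp : forall c : Ob D, mmor c -> Prop) (deg : Ob D -> nat) :
  is_multi_reedy Dm Dp deg ->
  is_reedy Dm (fun a b f => Dp a [:: existT (fun e => Hom a e) b f]) deg.
Proof.
case=> Hcat Hm [Hid Hcomp Hperm] Hfac [Hd1 Hd2 Hd3]; split=> //.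
- split=> // a b c f g hf hg.
  have := Hcomp a [:: existT (fun p : {d : Ob D & Hom a d} => mmor (projT1 p))
                      (existT (fun e => Hom a e) b f) [:: existT (fun e => Hom b e) c g]].
  by apply=> //; constructor.
- move=> a b f; case: (Hfac a [:: existT (fun e => Hom a e) b f]) => [[x [h P]]] /=.
  case=> [[hm hp eP] uniq]; simpl in hm, hp, eP.
  case: P hp eP uniq => [|[b' g] [|q P]] //= hp [eb eP] uniq.
  subst b'; have ef := inj_pair2 _ _ _ _ _ eP; subst f.
  exists (existT (fun x => (Hom a x * Hom x b)%type) x (h, g)); split; first by split.
  move=> [x' [h' g']] /= [hm' hp' ef].
  have := uniq (existT _ x' (h', [:: existT (fun e => Hom x' e) b g'])).
  rewrite /= ef => /(_ (And3 hm' hp' erefl)) e.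
  have ex : x = x' by exact: (f_equal (@projT1 _ _) e).
  subst x'; have := inj_pair2 _ _ _ _ _ e => -[<-] eg.
  by rewrite (inj_pair2 _ _ _ _ _ eg).
- split=> a b f hf; last exact: Hd3.
  by split; [have := Hd1 a _ hf; rewrite big_seq1|exact: Hd2].
Qed.

(** * Factorisations in [Theta C] *)

Fixpoint chunks (A : Type) (rs : seq (seq nat)) (P : seq A) : seq (seq (nat * A)) :=
  if rs is r :: rs' then zip r (take (size r) P) :: chunks rs' (drop (size r) P) else [::].

Lemma size_chunks A rs (P : seq A) : size (chunks rs P) = size rs.
Proof. by elim: rs P => //= r rs IH P; rewrite IH. Qed.

Lemma zip_mapr (A B D : Type) (f : B -> D) (r : seq A) (X : seq B) :
  zip r (map f X) = map (fun e => (e.1, f e.2)) (zip r X).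
Proof. by elim: r X => [|a r IH] [|b X] //=; rewrite IH. Qed.

Lemma chunks_map A B (f : A -> B) rs (P : seq A) :
  chunks rs (map f P) = map (map (fun e => (e.1, f e.2))) (chunks rs P).
Proof. by elim: rs P => //= r rs IH P; rewrite -map_take -map_drop IH zip_mapr. Qed.

Lemma chunks_flatten A (Ls : seq (seq (nat * A))) rs :
  map (map fst) Ls = rs -> chunks rs (flatten (map (map snd) Ls)) = Ls.
Proof.
elim: Ls rs => [|L Ls IH] [|r rs] //= [<- e].
have hs : size (map fst L) = size (map snd L) by rewrite !size_map.
by rewrite hs take_size_cat // drop_size_cat // IH // zip_unzip.
Qed.

Lemma flatten_chunks A rs (P : seq A) :
  size P = sumn (map size rs) -> flatten (map (map snd) (chunks rs P)) = P.
Proof.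
elim: rs P => [|r rs IH] P /=; first by case: P.
move=> hs; rewrite -/(unzip2 _) unzip2_zip; last by rewrite size_take_min; lia.
by rewrite IH ?cat_take_drop // size_drop; lia.
Qed.

Section Factorisation.
Variable C : catData.
Unset Implicit Arguments.
Variable Cm : forall a b : Ob C, Hom a b -> Prop.
Variable Cp : forall c : Ob C, mmor c -> Prop.
Hypothesis Cfac : forall (c : Ob C) (a : mmor c),
  exists! fa : {x : Ob C & (Hom c x * mmor x)%type},
    [/\ Cm c (projT1 fa) (projT2 fa).1, Cp (projT1 fa) (projT2 fa).2 &
        a = mprecomp (projT2 fa).2 (projT2 fa).1].
Variable x : thOb C.
Variable fam : seq {y : thOb C & thHom x y}.
Set Implicit Arguments.

Local Notation m := (size x).
Definition profile k := [seq dval (th_a (projT2 s)) k | s <- fam].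
Definition jump k := profile k.+1 != profile k.
Definition sigma k := count jump (iota 0 k).

Lemma profileE i j : profile i = profile j <-> forall s, List.In s fam ->
  dval (th_a (projT2 s)) i = dval (th_a (projT2 s)) j.
Proof. exact: map_eq_In. Qed.

Lemma sigma_split i d : sigma (i + d) = sigma i + count jump (iota i d).
Proof. by rewrite /sigma iotaD count_cat. Qed.

Lemma sigmaS k : sigma k.+1 = sigma k + jump k.
Proof. by rewrite -addn1 sigma_split /= addn0. Qed.

Lemma sigma_mono i j : i <= j -> sigma i <= sigma j.
Proof. by move=> hij; rewrite -(subnKC hij) sigma_split leq_addr. Qed.

Lemma sigmaS_leq k : sigma k.+1 <= (sigma k).+1.
Proof. by rewrite sigmaS; case: (jump k); lia. Qed.

Lemma sigma_profile i j : sigma i = sigma j -> profile i = profile j.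
Proof.
wlog hij : i j / i <= j.
  by move=> H e; case: (leqP i j) => h; [exact: H|symmetry; apply: H => //; exact: ltnW].
rewrite -(subnKC hij) sigma_split; move: (j - i) => d e.
have nojump : forall t, i <= t < i + d -> ~~ jump t.
  move=> t ht; apply/negP => st.
  have : 0 < count jump (iota i d).
    by rewrite -has_count; apply/hasP; exists t => //; rewrite mem_iota.
  lia.
elim: d nojump {e} => [|d IH] H; first by rewrite addn0.
rewrite IH; last by move=> t ht; apply: H; lia.
by have := H (i + d); rewrite addnS /jump => /(_ _) /negPn /eqP -> //; lia.
Qed.

Lemma profile_sigma i j : i <= m -> j <= m -> profile i = profile j -> sigma i = sigma j.
Proof.
wlog hij : i j / i <= j.
  move=> H hi hj e; case: (leqP i j) => h; first exact: H.
  by symmetry; apply: H => //; exact: ltnW.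
move=> _ hj /profileE e; rewrite -(subnKC hij) sigma_split.
have -> : count jump (iota i (j - i)) = 0.
  apply/eqP; rewrite -leqn0 leqNgt -has_count; apply/hasP => -[t].
  rewrite mem_iota => ht; apply/negP/negPn/eqP/profileE => s hs.
  have := dval_mono (th_a (projT2 s)) (leqnSn t) (_ : t.+1 <= m).
  have := dval_mono (th_a (projT2 s)) (_ : i <= t) (_ : t <= m).
  have := dval_mono (th_a (projT2 s)) (_ : t.+1 <= j) hj.
  by have := e s hs; lia.
by rewrite addn0.
Qed.

Lemma sigma_surj l : l <= sigma m -> exists i, i <= m /\ sigma i = l.
Proof. exact: (@step1_surj sigma (erefl : sigma 0 = 0) sigmaS_leq m l). Qed.

Lemma jump_at l : l < sigma m -> exists i, i < m /\ jump i /\ sigma i = l.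
Proof.
move=> hl; case: (@step1_jump sigma sigmaS_leq m l) => // i [hi [e1 e2]].
exists i; split=> //; split=> //.
by move: e2; rewrite sigmaS e1; case: (jump i) => //; lia.
Qed.

Lemma jump_inj i i' : jump i -> jump i' -> sigma i = sigma i' -> i = i'.
Proof.
move=> s1 s2 e; case: (ltngtP i i') => // h.
- by have := sigma_mono h; rewrite sigmaS s1; lia.
- by have := sigma_mono h; rewrite sigmaS s2; lia.
Qed.

Definition sigma_rep l := find (fun i => sigma i == l) (iota 0 m.+1).

Lemma sigma_repP l : l <= sigma m -> sigma_rep l <= m /\ sigma (sigma_rep l) = l.
Proof.
move=> hl; have hex : has (fun i => sigma i == l) (iota 0 m.+1).
  case: (sigma_surj hl) => i [hi e]; apply/hasP; exists i; first by rewrite mem_iota; lia.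
  by apply/eqP.
have := hex; rewrite has_find size_iota => hs.
have := nth_find 0 hex; rewrite nth_iota // add0n => /eqP e.
by split=> //; lia.
Qed.

Lemma sigma_rep_mono l l' : l <= l' -> l' <= sigma m -> sigma_rep l <= sigma_rep l'.
Proof.
move=> h hl'; have [s1 e1] := sigma_repP (leq_trans h hl'); have [s2 e2] := sigma_repP hl'.
rewrite leqNgt; apply/negP => hlt.
have := sigma_mono (ltnW hlt); rewrite e1 e2 => h'.
have ell : l = l' by lia.
by subst l'; lia.
Qed.

Definition cfacS (i : 'I_m) :=
  constructive_indefinite_description _ (Cfac (obi x i) (th_components fam i)).
Definition cfac (i : 'I_m) := proj1_sig (cfacS i).
Definition cmid i := projT1 (cfac i).
Definition cminus i : Hom (obi x i) (cmid i) := (projT2 (cfac i)).1.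
Definition cplus i : mmor (cmid i) := (projT2 (cfac i)).2.

Lemma cfacP i : [/\ Cm (obi x i) (cmid i) (cminus i), Cp (cmid i) (cplus i) &
  th_components fam i = mprecomp (cplus i) (cminus i)].
Proof. exact: (proj1 (proj2_sig (cfacS i))). Qed.

Lemma cfac_uniq i (fa : {w : Ob C & (Hom (obi x i) w * mmor w)%type}) :
  [/\ Cm (obi x i) (projT1 fa) (projT2 fa).1, Cp (projT1 fa) (projT2 fa).2 &
      th_components fam i = mprecomp (projT2 fa).2 (projT2 fa).1] -> cfac i = fa.
Proof. exact: (proj2 (proj2_sig (cfacS i))). Qed.

Lemma cfacE i : cfac i = existT _ (cmid i) (cminus i, cplus i).
Proof. by rewrite /cmid /cminus /cplus; case: (cfac i) => w [a b]. Qed.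

Definition fac_mid : thOb C := [seq cmid i | i : 'I_m <- enum 'I_m & jump i].

Lemma size_fac_mid : size fac_mid = sigma m.
Proof.
rewrite /fac_mid size_map size_filter /sigma.
transitivity (count jump (map val (enum 'I_m))); first by rewrite count_map.
by rewrite val_enum_ord.
Qed.

Lemma obi_fac_mid (i : 'I_m) : jump i ->
  exists l : 'I_(size fac_mid), nat_of_ord l = sigma i /\ obi fac_mid l = cmid i.
Proof.
move=> si.
have hl : sigma i < size fac_mid.
  by rewrite size_fac_mid; have := sigma_mono (ltn_ord i); rewrite sigmaS si; lia.
exists (Ordinal hl); split=> //.
rewrite /obi (tnth_nth (cmid i)) /= /fac_mid.
have hsi : (fun j : 'I_m => jump j) (nth i (enum 'I_m) i) by rewrite nth_ord_enum.
have hsz : nat_of_ord i < size (enum 'I_m) by rewrite size_enum_ord.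
have H := nth_map_filter (cmid i) cmid (P := fun j : 'I_m => jump j) hsz hsi.
have e : count (fun j : 'I_m => jump j) (take i (enum 'I_m)) = sigma i.
  transitivity (count jump (map val (take i (enum 'I_m)))); first by rewrite count_map.
  rewrite map_take val_enum_ord take_iota /sigma; congr (count _ (iota _ _)).
  have := ltn_ord i; lia.
by rewrite e nth_ord_enum in H.
Qed.

Definition ranges (i : nat) := [seq drange (th_a (projT2 s)) i | s <- fam].

Lemma th_componentsE (i : 'I_m) :
  th_components fam i = flatten (map (map snd) [seq th_enc (projT2 s) i | s <- fam]).
Proof. by rewrite /th_components -map_comp. Qed.

Lemma size_th_components (i : 'I_m) : size (th_components fam i) = sumn (map size (ranges i)).
Proof.
rewrite th_componentsE size_flatten /shape -!map_comp; congr sumn; apply: eq_map => s /=.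
by rewrite size_map -(size_map fst) th_enc_fst.
Qed.

Lemma size_cplus (i : 'I_m) : size (cplus i) = sumn (map size (ranges i)).
Proof. by case: (cfacP i) => _ _ e; rewrite -size_th_components e size_map. Qed.

Lemma cplus_targets (i : 'I_m) :
  map (fun p => projT1 p) (cplus i) = map (fun p => projT1 p) (th_components fam i).
Proof. by case: (cfacP i) => _ _ ->; rewrite /mprecomp -map_comp. Qed.

Lemma chunks_th_components (i : 'I_m) :
  chunks (ranges i) (th_components fam i) = [seq th_enc (projT2 s) i | s <- fam].
Proof.
rewrite th_componentsE chunks_flatten //.
by rewrite /ranges -map_comp; apply: eq_map => s /=; rewrite th_enc_fst.
Qed.

Lemma jump_of (l : 'I_(size fac_mid)) : exists i : 'I_m, jump i /\ sigma i = l.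
Proof.
have hl : l < sigma m by rewrite -size_fac_mid.
by case: (jump_at hl) => i [hi [si ei]]; exists (Ordinal hi).
Qed.

Definition chunkseq (w : Ob C) := seq (seq (nat * {d : Ob C & Hom w d})).

(* The [(Theta C)^+] part at the [l]-th point of the middle object: [cplus i] for the
   jump [i] over [l], cut into one piece per member of [fam] and transported along
   [obi fac_mid l = cmid i]. *)
Lemma mid_chunks_ex (l : 'I_(size fac_mid)) :
  exists L : chunkseq (obi fac_mid l), exists i : 'I_m, jump i /\ sigma i = l /\
    existT chunkseq (obi fac_mid l) L = existT chunkseq (cmid i) (chunks (ranges i) (cplus i)).
Proof.
case: (jump_of l) => i [si ei]; case: (obi_fac_mid si) => l' [el' ol'].
have ell : l' = l by apply: ord_inj; rewrite el' ei.
subst l'; case: (@existT_cast _ chunkseq _ _ ol' (chunks (ranges i) (cplus i))) => L e.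
by exists L, i.
Qed.

Definition mid_chunks (l : 'I_(size fac_mid)) : chunkseq (obi fac_mid l) :=
  proj1_sig (constructive_indefinite_description _ (mid_chunks_ex l)).

Lemma mid_chunksP (l : 'I_(size fac_mid)) (i : 'I_m) : jump i -> sigma i = l ->
  existT chunkseq (obi fac_mid l) (mid_chunks l) =
  existT chunkseq (cmid i) (chunks (ranges i) (cplus i)).
Proof.
move=> si ei.
case: (proj2_sig (constructive_indefinite_description _ (mid_chunks_ex l))) => i' [si' [ei' e]].
have ii : i' = i by apply: ord_inj; apply: jump_inj => //; rewrite ei ei'.
by subst i'; rewrite /mid_chunks.
Qed.

Lemma sigma_leq_size i : i <= m -> sigma i <= size fac_mid.
Proof. by move=> hi; rewrite size_fac_mid; exact: sigma_mono. Qed.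

Definition sigma_dmor : dmor m (size fac_mid) :=
  @mk_dmor m (size fac_mid) sigma (fun i j hij _ => sigma_mono hij) sigma_leq_size.

Lemma dval_sigma_dmor k : k <= m -> dval sigma_dmor k = sigma k.
Proof. exact: dval_mk. Qed.

Lemma drange_sigma_dmor (i : 'I_m) :
  drange sigma_dmor i = if jump i then [:: sigma i] else [::].
Proof.
rewrite /drange !dval_sigma_dmor //; last exact: ltnW.
by rewrite sigmaS; case: (jump i) => /=; rewrite ?addn1 ?subSnn ?addn0 ?subnn.
Qed.

Definition minus_enc (i : 'I_m) : seq (nat * {d : Ob C & Hom (obi x i) d}) :=
  if jump i then [:: (sigma i, existT (fun d => Hom (obi x i) d) (cmid i) (cminus i))] else [::].

Lemma minus_part_ex :
  exists h : thHom x fac_mid, th_a h = sigma_dmor /\ forall i, th_enc h i = minus_enc i.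
Proof.
apply: thHom_of_enc => i; rewrite /minus_enc.
  by rewrite drange_sigma_dmor; case: (jump i).
case si: (jump i); last by constructor.
constructor=> //; case: (obi_fac_mid si) => l [el ol]; by exists l.
Qed.

Definition fam0 : {y : thOb C & thHom x y} := existT _ x (thid x).
Local Notation fam_nth n := (nth fam0 fam n).

Lemma In_fam_nth (n : nat) : n < size fam -> List.In (fam_nth n) fam.
Proof. by move=> hn; apply/(In_nthP fam0); exists n. Qed.

Lemma dval_sigma_rep s k : List.In s fam -> k <= m ->
  dval (th_a (projT2 s)) (sigma_rep (sigma k)) = dval (th_a (projT2 s)) k.
Proof.
move=> hs hk; have [h1 h2] := sigma_repP (sigma_mono hk).
have := sigma_profile h2; move/profileE; apply; exact: hs.
Qed.

Definition plus_dmor (n : nat) : dmor (size fac_mid) (size (projT1 (fam_nth n))).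
Proof.
refine (@mk_dmor (size fac_mid) _ (fun l => dval (th_a (projT2 (fam_nth n))) (sigma_rep l))
                 _ (fun _ _ => dval_le _ _)).
move=> l l' hll hl'; apply: dval_mono.
  by apply: sigma_rep_mono => //; rewrite -size_fac_mid.
by have := sigma_repP (l := l'); rewrite -size_fac_mid => /(_ hl') [].
Defined.

Lemma dval_plus_dmor n l : l <= size fac_mid ->
  dval (plus_dmor n) l = dval (th_a (projT2 (fam_nth n))) (sigma_rep l).
Proof. exact: dval_mk. Qed.

Lemma drange_plus_dmor n (i : 'I_m) (l : nat) : n < size fam -> jump i -> sigma i = l ->
  drange (plus_dmor n) l = drange (th_a (projT2 (fam_nth n))) i.
Proof.
move=> hn si ei.
have h1 : sigma i.+1 = l.+1 by rewrite sigmaS si ei addn1.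
have hl1 : l.+1 <= size fac_mid by rewrite -h1; exact: sigma_leq_size.
rewrite /drange !dval_plus_dmor //; last exact: ltnW.
by rewrite -h1 -ei !dval_sigma_rep //; try exact: In_fam_nth; exact: ltnW.
Qed.

Definition enc_shape (w : Ob C) (e : nat * {d : Ob C & Hom w d}) : nat * Ob C :=
  (e.1, projT1 e.2).
Definition chunks_shape (w : Ob C) (L : chunkseq w) := map (map (@enc_shape w)) L.

Lemma mid_chunks_shape (l : 'I_(size fac_mid)) (i : 'I_m) : jump i -> sigma i = l ->
  chunks_shape (mid_chunks l) = [seq map (@enc_shape _) (th_enc (projT2 s) i) | s <- fam].
Proof.
move=> si ei; rewrite (eq_existT_app chunks_shape (mid_chunksP si ei)) /chunks_shape.
rewrite -(@chunks_map _ _ (fun p => projT1 p)) cplus_targets chunks_map chunks_th_components.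
by rewrite -map_comp.
Qed.

Lemma size_mid_chunks (l : 'I_(size fac_mid)) : size (mid_chunks l) = size fam.
Proof.
case: (jump_of l) => i [si ei].
rewrite -(size_map (map (@enc_shape _))) -/(chunks_shape _) (mid_chunks_shape si ei).
by rewrite size_map.
Qed.

Lemma mid_chunks_nth (l : 'I_(size fac_mid)) (i : 'I_m) n :
  jump i -> sigma i = l -> n < size fam ->
  map (@enc_shape _) (nth [::] (mid_chunks l) n) =
  map (@enc_shape _) (th_enc (projT2 (fam_nth n)) i).
Proof.
move=> si ei hn; rewrite -(nth_map [::] [::]) ?size_mid_chunks // -/(chunks_shape _).
by rewrite (mid_chunks_shape si ei) (nth_map fam0).
Qed.

Lemma Forall_wf_shape y (w w' : Ob C) (L : seq (nat * {d : Ob C & Hom w d}))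
  (L' : seq (nat * {d : Ob C & Hom w' d})) :
  map (@enc_shape w) L = map (@enc_shape w') L' ->
  List.Forall (@enc_entry_wf C y w') L' -> List.Forall (@enc_entry_wf C y w) L.
Proof.
move=> e HL'; apply/List.Forall_forall => a ha.
have : List.In (enc_shape a) (map (@enc_shape w') L').
  by rewrite -e; apply/List.in_map_iff; exists a.
case/List.in_map_iff => b [eb hb]; have := Forall_In HL' hb.
case=> j [hj hd]; exists j; split.
- by rewrite hj; have := f_equal fst eb.
- by rewrite -hd; have := f_equal snd eb.
Qed.

Lemma plus_part_ex (n : 'I_(size fam)) : exists g : thHom fac_mid (projT1 (fam_nth n)),
  th_a g = plus_dmor n /\ forall l, th_enc g l = nth [::] (mid_chunks l) n.
Proof.
apply: thHom_of_enc => l; case: (jump_of l) => i [si ei].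
- rewrite (drange_plus_dmor _ si ei) // -th_enc_fst.
  have := mid_chunks_nth si ei (ltn_ord n); rewrite /enc_shape => /(f_equal (map fst)).
  by rewrite -!map_comp.
- apply: (Forall_wf_shape (mid_chunks_nth si ei (ltn_ord n))); exact: th_enc_wf.
Qed.

Definition is_theta_fac
  (fa : {w : thOb C & (thHom x w * seq {y : thOb C & thHom w y})%type}) : Prop :=
  [/\ ThetaMinus Cm (projT2 fa).1, ThetaPlus Cp (projT2 fa).2 &
      fam = mprecomp (C := ThetaC C) (projT2 fa).2 (projT2 fa).1].

Section AnyFactorisation.
Variable mid' : thOb C.
Variable h' : thHom x mid'.
Variable G' : seq {y : thOb C & thHom mid' y}.
Hypothesis minus_h' : ThetaMinus Cm (h' : Hom (x : Ob (ThetaC C)) mid').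
Hypothesis plus_G' : ThetaPlus Cp (G' : mmor (mid' : Ob (ThetaC C))).
Hypothesis fam_eq' : fam = mprecomp (C := ThetaC C) G' h'.

Let mid0' : {y : thOb C & thHom mid' y} := existT _ mid' (thid mid').
Local Notation gn n := (nth mid0' G' n).

Lemma size_plus_part : size G' = size fam.
Proof. by rewrite fam_eq' size_map. Qed.

Lemma fam_nth_comp n : n < size fam ->
  fam_nth n = existT (fun y => thHom x y) (projT1 (gn n)) (thcomp (projT2 (gn n)) h').
Proof. by move=> hn; rewrite {1}fam_eq' /mprecomp (nth_map mid0') // size_plus_part. Qed.

Lemma dval_fam_nth n k : n < size fam ->
  dval (th_a (projT2 (fam_nth n))) k = dval (th_a (projT2 (gn n))) (dval (th_a h') k).
Proof.
move=> hn; have := eq_existT_app (fun y (f : thHom x y) => dval (th_a f) k)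
                                 (existT_eta (fam_nth_comp hn)).
by rewrite /= dval_comp.
Qed.

(* [h'] moves exactly where the profile jumps: [fam] factors through [h'], and [G']
   separates points. *)
Lemma dval_minus_part k : k <= m -> dval (th_a h') k = sigma k.
Proof.
case: minus_h' => hs _; case/ThetaPlusP: plus_G' => sepG _.
elim: k => [|k IH] hk; first by rewrite dsurj_dval0.
have := dsurj_dvalS hs hk; have := dval_mono (th_a h') (leqnSn k) hk.
rewrite sigmaS -(IH (ltnW hk)); case si: (jump k) => /=.
- suff : dval (th_a h') k != dval (th_a h') k.+1 by lia.
  apply/eqP => e; move: si; rewrite /jump => /eqP; apply.
  apply/profileE => s /(In_nthP fam0) [n [hn <-]].
  by rewrite !dval_fam_nth // e.
- suff : dval (th_a h') k = dval (th_a h') k.+1 by lia.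
  apply: sepG; [exact: dval_le|exact: dval_le|].
  move=> s' /(In_nthP mid0') [n [hn <-]]; rewrite size_plus_part in hn.
  move: si; rewrite /jump => /negbFE /eqP /profileE /(_ _ (In_fam_nth hn)).
  by rewrite !dval_fam_nth.
Qed.

Lemma size_mid' : size mid' = size fac_mid.
Proof.
by case: minus_h' => hs _; rewrite -(dsurj_dval_last hs) dval_minus_part // size_fac_mid.
Qed.

Lemma th_components_factor (i : 'I_m) (j' : 'I_(size mid')) (hc : Hom (obi x i) (obi mid' j')) :
  th_f h' i = [:: existT _ j' hc] -> th_components fam i = mprecomp (th_components G' j') hc.
Proof.
move=> eh; rewrite /th_components {1}fam_eq' /mprecomp -map_comp map_flatten -map_comp.
congr flatten.
apply: eq_map => s' /=; rewrite th_enc_comp eh /= cats0 -!map_comp //.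
Qed.

Lemma cfac_factor (i : 'I_m) : jump i ->
  exists (j' : 'I_(size mid')) (hc : Hom (obi x i) (obi mid' j')),
  [/\ th_f h' i = [:: existT _ j' hc], nat_of_ord j' = sigma i &
      cfac i = existT _ (obi mid' j') (hc, th_components G' j')].
Proof.
move=> si; case: minus_h' => hs HF.
have dr : drange (th_a h') i = [:: sigma i].
  rewrite /drange !dval_minus_part //; last exact: ltnW.
  by rewrite sigmaS si addn1 subSnn.
case: (th_f_single dr) => j' [hc [ej eh]].
exists j', hc; split=> //.
apply: cfac_uniq; split => /=.
- by have := HF i; rewrite eh => /List.Forall_forall /(_ _ (or_introl erefl)).
- by case/ThetaPlusP: plus_G' => _; apply.
- exact: th_components_factor.
Qed.

Lemma mid_unique : mid' = fac_mid.
Proof.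
apply: thOb_eq; first exact: size_mid'.
move=> l; case: (jump_of l) => i [si ei].
case: (cfac_factor si) => j' [hc [_ ej ef]].
exists j'; split; first by rewrite ej ei.
case: (obi_fac_mid si) => l' [el' ol'].
have ll : l' = l by apply: ord_inj; rewrite el' ei.
subst l'; rewrite ol'.
by have := f_equal (@projT1 _ _) ef; rewrite cfacE.
Qed.

End AnyFactorisation.

Section Constructed.
Variable h : thHom x fac_mid.
Variable gf : forall n : 'I_(size fam), thHom fac_mid (projT1 (fam_nth n)).
Hypothesis h_dmor : th_a h = sigma_dmor.
Hypothesis h_enc : forall i, th_enc h i = minus_enc i.
Hypothesis gf_dmor : forall n, th_a (gf n) = plus_dmor n.
Hypothesis gf_enc : forall n l, th_enc (gf n) l = nth [::] (mid_chunks l) n.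

Definition plus_fam : seq {y : thOb C & thHom fac_mid y} :=
  [seq existT (fun y => thHom fac_mid y) (projT1 (fam_nth n)) (gf n)
  | n : 'I_(size fam) <- enum 'I_(size fam)].

Lemma th_f_h_jump (i : 'I_m) : jump i ->
  exists p, th_f h i = [:: p] /\ nat_of_ord (projT1 p) = sigma i /\
    existT (fun w => Hom (obi x i) w) (obi fac_mid (projT1 p)) (projT2 p) =
    existT _ (cmid i) (cminus i).
Proof.
move=> si; have := h_enc i; rewrite /minus_enc si /th_enc.
case: (th_f h i) => [|p [|p' l]] //= [e1 e2].
by exists p; split=> //; split.
Qed.

Lemma th_f_h_nojump (i : 'I_m) : ~~ jump i -> th_f h i = [::].
Proof. by move=> si; have := h_enc i; rewrite /minus_enc (negbTE si) /th_enc; case: (th_f h i). Qed.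

Lemma minus_part_minus : ThetaMinus Cm (h : Hom (x : Ob (ThetaC C)) fac_mid).
Proof.
split.
  apply/dsurjP => j; rewrite h_dmor => hj; rewrite size_fac_mid in hj.
  case: (sigma_surj hj) => i [hi ei].
  by exists i; split=> //; rewrite dval_sigma_dmor.
move=> i; case si: (jump i); last by rewrite th_f_h_nojump ?si.
case: (th_f_h_jump si) => p [-> [_ ep]]; constructor=> //.
case: (cfacP i) => hc _ _.
exact: (@eq_existT_prop _ (fun w => Hom (obi x i) w) (fun w k => Cm (obi x i) w k) _ _ _ _ ep hc).
Qed.

Lemma In_plus_fam (n : 'I_(size fam)) :
  List.In (existT (fun y => thHom fac_mid y) (projT1 (fam_nth n)) (gf n)) plus_fam.
Proof. by apply/List.in_map_iff; exists n; split=> //; apply: In_mem; rewrite mem_enum. Qed.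

Lemma plus_fam_plus : ThetaPlus Cp (plus_fam : mmor (fac_mid : Ob (ThetaC C))).
Proof.
apply/ThetaPlusP; split.
- move=> l l' hl hl' E.
  have hk : profile (sigma_rep l) = profile (sigma_rep l').
    apply/profileE => s /(In_nthP fam0) [n [hn <-]].
    have := E _ (In_plus_fam (Ordinal hn)); rewrite /= gf_dmor !dval_plus_dmor //.
  have h1 : l <= sigma m by rewrite -size_fac_mid.
  have h2 : l' <= sigma m by rewrite -size_fac_mid.
  have [s1 e1] := sigma_repP h1; have [s2 e2] := sigma_repP h2.
  by rewrite -e1 -e2; apply: profile_sigma.
- move=> l; case: (jump_of l) => i [si ei].
  have -> : th_components plus_fam l = flatten (map (map snd) (mid_chunks l)).
    rewrite /th_components /plus_fam -map_comp.
    rewrite -(map_nth_enum [::] (size_mid_chunks l)) -map_comp; congr flatten.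
    by apply: eq_map => n /=; rewrite gf_enc.
  have e := @eq_existT_map _ chunkseq (fun w => mmor w) (fun w L => flatten (map (map snd) L))
                           _ _ _ _ (mid_chunksP si ei).
  rewrite /= flatten_chunks in e; last by rewrite size_cplus.
  case: (cfacP i) => _ hc _.
  exact: (@eq_existT_prop _ (fun w => mmor w) (fun w P => Cp w P) _ _ _ _ e hc).
Qed.

Lemma fam_nth_factor (n : 'I_(size fam)) : projT2 (fam_nth n) = thcomp (gf n) h.
Proof.
have hn := In_fam_nth (ltn_ord n).
apply: thHom_ext => [k hk|i].
  rewrite dval_comp h_dmor dval_sigma_dmor // gf_dmor dval_plus_dmor; last exact: sigma_leq_size.
  by rewrite dval_sigma_rep.
rewrite th_enc_comp; case si: (jump i).
- case: (th_f_h_jump si) => p [-> [ep1 ep2]] /=; rewrite cats0 gf_enc.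
  have ec := mid_chunksP (l := projT1 p) si (esym ep1).
  have := @eq_existT_pair _ (fun w => Hom (obi x i) w) chunkseq _ _ _ _ _ _ ep2 ec.
  move/(@eq_existT_app _ (fun w => (Hom (obi x i) w * chunkseq w)%type) _
     (fun w pr => [seq (q.1, existT (fun d => Hom (obi x i) d) (projT1 q.2)
                                    (comp (projT2 q.2) pr.1))
                   | q <- nth [::] pr.2 n]) _ _ _ _) => /= ->.
  rewrite -(nth_map [::] [::]); last by rewrite size_chunks size_map.
  rewrite -(chunks_map (fun p : {d : Ob C & Hom (cmid i) d} =>
             existT (fun d => Hom (obi x i) d) (projT1 p) (comp (projT2 p) (cminus i)))).
  case: (cfacP i) => _ _ ef; rewrite /mprecomp in ef; rewrite -ef chunks_th_components.
  by rewrite (nth_map fam0).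
- rewrite th_f_h_nojump ?si //= /th_enc th_f_nil //.
  have := negbFE si; rewrite /jump => /eqP /profileE /(_ _ hn) e.
  by rewrite /drange e subnn.
Qed.

Lemma fam_factor : fam = mprecomp (C := ThetaC C) plus_fam h.
Proof.
rewrite /mprecomp /plus_fam -map_comp.
have ef := map_nth_enum fam0 (erefl (size fam)).
rewrite -{1}ef; apply: eq_map => n /=.
by rewrite -fam_nth_factor; case: (fam_nth n).
Qed.


Section SameMiddle.
Variable h' : thHom x fac_mid.
Variable G' : seq {y : thOb C & thHom fac_mid y}.
Hypothesis minus_h' : ThetaMinus Cm (h' : Hom (x : Ob (ThetaC C)) fac_mid).
Hypothesis plus_G' : ThetaPlus Cp (G' : mmor (fac_mid : Ob (ThetaC C))).
Hypothesis fam_eq' : fam = mprecomp (C := ThetaC C) G' h'.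

Let mid0 : {y : thOb C & thHom fac_mid y} := existT _ fac_mid (thid fac_mid).

Lemma minus_part_unique : h' = h.
Proof.
apply: thHom_ext => [k hk|i].
  by rewrite (dval_minus_part minus_h' plus_G' fam_eq') // h_dmor dval_sigma_dmor.
rewrite h_enc /minus_enc; case si: (jump i).
- case: (cfac_factor minus_h' plus_G' fam_eq' si) => j' [hc [eh' ej ef]].
  rewrite /th_enc eh' /= /enc_entry /= ej; congr [:: (_, _)].
  rewrite cfacE in ef.
  by have := @eq_existT_map _ _ _ (fun w (pr : (Hom (obi x i) w * mmor w)%type) => pr.1) _ _ _ _ ef.
- rewrite /th_enc th_f_nil // /drange.
  rewrite !(dval_minus_part minus_h' plus_G' fam_eq') //; last exact: ltnW.
  by rewrite sigmaS si addn0 subnn.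
Qed.

Lemma dval_plus_part n : n < size fam -> forall l, l <= size fac_mid ->
  dval (th_a (projT2 (nth mid0 G' n))) l = dval (th_a (projT2 (fam_nth n))) (sigma_rep l).
Proof.
move=> hn l hl; have hl' : l <= sigma m by rewrite -size_fac_mid.
have [s1 e1] := sigma_repP hl'.
by rewrite (dval_fam_nth fam_eq' _ hn) (dval_minus_part minus_h' plus_G' fam_eq') // e1.
Qed.

Lemma th_enc_plus_part n : n < size fam -> forall l : 'I_(size fac_mid),
  th_enc (projT2 (nth mid0 G' n)) l = nth [::] (mid_chunks l) n.
Proof.
move=> hn l; have sG := size_plus_part fam_eq'.
case: (jump_of l) => i [si ei].
case: (cfac_factor minus_h' plus_G' fam_eq' si) => j' [hc [eh' ej ef]].
have ejl : j' = l by apply: ord_inj; rewrite ej ei.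
subst j'; rewrite cfacE in ef.
have e1 := @eq_existT_map _ _ chunkseq
  (fun w (pr : (Hom (obi x i) w * mmor w)%type) => chunks (ranges i) pr.2) _ _ _ _ ef.
have /= -> := inj_pair2 _ _ _ _ _ (etrans (mid_chunksP si ei) e1).
rewrite /th_components (_ : flatten _ =
    flatten (map (map snd) [seq th_enc (projT2 s') l | s' <- G'])); last by rewrite -map_comp.
rewrite chunks_flatten; first by rewrite (nth_map mid0) // sG.
rewrite -map_comp /ranges; apply: (@eq_from_nth _ [::]); first by rewrite !size_map sG.
move=> n2; rewrite size_map sG => hn2.
rewrite (nth_map mid0) ?sG // (nth_map fam0) //= th_enc_fst.
have E1 : nat_of_ord l = dval (th_a h') i.
  by rewrite (dval_minus_part minus_h' plus_G' fam_eq') ?ei //; exact: ltnW.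
have E2 : (nat_of_ord l).+1 = dval (th_a h') i.+1.
  by rewrite (dval_minus_part minus_h' plus_G' fam_eq') // sigmaS si ei addn1.
by rewrite /drange E2 E1 -!(dval_fam_nth fam_eq' _ hn2).
Qed.

Lemma plus_part_unique : G' = plus_fam.
Proof.
apply: (@eq_from_nth _ mid0).
  by rewrite (size_plus_part fam_eq') /plus_fam size_map size_enum_ord.
move=> n; rewrite (size_plus_part fam_eq') => hn; set n' := Ordinal hn.
have -> : nth mid0 plus_fam n = existT _ (projT1 (fam_nth n)) (gf n').
  by rewrite /plus_fam (nth_map n') ?size_enum_ord // (nth_ord_enum n' n').
have ey : projT1 (nth mid0 G' n) = projT1 (fam_nth n) by rewrite (fam_nth_comp fam_eq' hn).
move: ey (dval_plus_part hn) (th_enc_plus_part hn).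
case: (nth mid0 G' n) => y' g' /= ey fb fc; subst y'.
congr existT; apply: thHom_ext => [l hl|l]; first by rewrite fb // gf_dmor dval_plus_dmor.
by rewrite fc; exact: (esym (gf_enc n' l)).
Qed.

End SameMiddle.

Lemma theta_fac_unique (fa : {w : thOb C & (thHom x w * seq {y : thOb C & thHom w y})%type}) :
  is_theta_fac fa ->
  existT (fun w => (thHom x w * seq {y : thOb C & thHom w y})%type) fac_mid (h, plus_fam) = fa.
Proof.
case: fa => mid' [h' G'] [/= minus_h' plus_G' fam_eq'].
have emid := mid_unique minus_h' plus_G' fam_eq'; subst mid'.
by rewrite (minus_part_unique minus_h' plus_G' fam_eq') (plus_part_unique minus_h' plus_G' fam_eq').
Qed.

End Constructed.

Lemma theta_fac :
  exists! fa : {w : thOb C & (thHom x w * seq {y : thOb C & thHom w y})%type}, is_theta_fac fa.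
Proof.
case: minus_part_ex => h [h_dmor h_enc].
case: (dependent_choice plus_part_ex) => gf gfs.
have gf_dmor : forall n, th_a (gf n) = plus_dmor n by move=> n; case: (gfs n).
have gf_enc : forall n l, th_enc (gf n) l = nth [::] (mid_chunks l) n by move=> n; case: (gfs n).
exists (existT _ fac_mid (h, plus_fam gf)); split.
  split; first exact: minus_part_minus h_dmor h_enc.
    exact: plus_fam_plus gf_dmor gf_enc.
  exact: fam_factor h_dmor h_enc gf_dmor gf_enc.
by move=> fa Hfa; exact: (theta_fac_unique h_dmor h_enc gf_dmor gf_enc Hfa).
Qed.

End Factorisation.

Unset Implicit Arguments.

Theorem mainTheorem2 (C : catData) (Cm : forall a b : Ob C, Hom a b -> Prop)
  (Cp : forall c : Ob C, mmor c -> Prop) (deg : Ob C -> nat) :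
  is_multi_reedy Cm Cp deg ->
  is_multi_reedy (ThetaMinus Cm) (ThetaPlus Cp) (theta_deg deg) /\
  exists (Rm Rp : forall a b : Ob (ThetaC C), Hom a b -> Prop)
         (d : Ob (ThetaC C) -> nat), is_reedy Rm Rp d.
Proof.
case=> Ccat Cm_wide Cp_wide Cfac [Cp_deg Cp_deg_id Cm_deg].
have theta_multi_reedy : is_multi_reedy (ThetaMinus Cm) (ThetaPlus Cp) (theta_deg deg).
  split.
  - exact: theta_is_category.
  - exact: theta_minus_wide.
  - exact: theta_plus_wide.
  - by move=> x fam; exact: theta_fac.
  - split.
    + by move=> x fam; exact: theta_plus_deg.
    + by move=> x y f; exact: theta_plus_deg_id.
    + by move=> x y f; exact: theta_minus_deg.
split=> //.
exists (ThetaMinus Cm), (fun a b f => ThetaPlus Cp [:: existT (fun e => Hom a e) b f]).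
by exists (theta_deg deg); exact: multi_reedy_is_reedy.
Qed.
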